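(* Let $q\ge 1$ and assume Hypothesis (H$_q$). Then for all $x\in[a,b]$, $\lambda\in[0,1]$ and $\theta>0$, $$\big|S_f(mx,\lambda,\theta,ma,mb)\big|\le\frac{m^\theta A_1(\theta,\lambda)^{1-\frac1q}}{b-a}\Big\{(x-a)^{\theta+1}\Big(|f'(mx)|^qA_2(\alpha,\theta,\lambda)+m|f'(a)|^qA_3(\alpha,\theta,\lambda)\Big)^{\frac1q}+(b-x)^{\theta+1}\Big(|f'(mx)|^qA_2(\alpha,\theta,\lambda)+m|f'(b)|^qA_3(\alpha,\theta,\lambda)\Big)^{\frac1q}\Big\}.$$
   Context: Let $\Gamma$ denote Euler's Gamma function. Given $m\in(0,1]$, $a<b$, $x\in[a,b]$, $\lambda\in[0,1]$, $\theta>0$ and a function $f$ integrable on $[ma,mb]$, the Riemann–Liouville fractional integrals appearing below are $J^\theta_{(mx)^-}f(ma)=\frac{1}{\Gamma(\theta)}\int_{ma}^{mx}(s-ma)^{\theta-1}f(s)\,ds$ and $J^\theta_{(mx)^+}f(mb)=\frac{1}{\Gamma(\theta)}\int_{mx}^{mb}(mb-s)^{\theta-1}f(s)\,ds$ (each equal to $0$ if its interval of integration is degenerate), and $$S_f(mx,\lambda,\theta,ma,mb)=(1-\lambda)m^{\theta-1}\frac{(x-a)^\theta+(b-x)^\theta}{b-a}f(mx)+\lambda m^{\theta-1}\frac{(x-a)^\theta f(ma)+(b-x)^\theta f(mb)}{b-a}-\frac{\Gamma(\theta+1)}{m(b-a)}\Big[J^\theta_{(mx)^-}f(ma)+J^\theta_{(mx)^+}f(mb)\Big].$$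 $(\alpha,m)$-convexity: for $(\alpha,m)\in[0,1]\times(0,1]$ and an interval $K\subseteq[0,\infty)$, a function $g:K\to\mathbb{R}$ is $(\alpha,m)$-convex on $K$ if $g(tX+m(1-t)Y)\le t^\alpha g(X)+m(1-t^\alpha)g(Y)$ for all $X,Y\in K$ and $t\in[0,1]$ with $tX+m(1-t)Y\in K$ (convention $0^0=1$). Hypothesis (H$_q$): $I\subseteq[0,\infty)$ is an interval, $f:I\to\mathbb{R}$ is differentiable on the interior $I^\circ$, $m\in(0,1]$, $\alpha\in[0,1]$, $a<b$ with $ma,b\in I^\circ$, $f'$ is Lebesgue integrable on $[ma,mb]$, and $|f'|^q$ is $(\alpha,m)$-convex on $[ma,b]$. Constants: $A_1(\theta,\lambda)=\frac{2\theta\lambda^{1+\frac1\theta}+1}{\theta+1}-\lambda$, $A_2(\alpha,\theta,\lambda)=\frac{2\theta\lambda^{1+\frac{1+\alpha}{\theta}}}{(\alpha+1)(\alpha+\theta+1)}+\frac{1}{\alpha+\theta+1}-\frac{\lambda}{\alpha+1}$, $A_3(\alpha,\theta,\lambda)=A_1(\theta,\lambda)-A_2(\alpha,\theta,\lambda)$. *)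

From Stdlib Require Import Reals Lra Classical ClassicalEpsilon.
Open Scope R_scope.

(* Real power with the conventions x^y = 0 for x <= 0, y <> 0 and x^0 = 1
   (in particular 0^0 = 1, 0^y = 0 for y > 0). For x > 0 it is Rpower. *)
Definition rpow (x y : R) : R :=
  if Rlt_dec 0 x then Rpower x y
  else if Req_EM_T y 0 then 1 else 0.

(* Total Riemann integral: RiemannInt when integrable, 0 otherwise. *)
Definition Rint (g : R -> R) (c d : R) : R :=
  match excluded_middle_informative (inhabited (Riemann_integrable g c d)) with
  | left H => RiemannInt (epsilon H (fun _ => True))
  | right _ => 0
  end.

(* Limit as h -> 0+ (0 if it does not exist). *)
Definition lim0p (g : R -> R) : R :=
  match excluded_middle_informative
     (exists l, forall eps, 0 < eps -> exists del, 0 < del /\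
        forall h, 0 < h < del -> Rabs (g h - l) < eps) with
  | left H => proj1_sig (constructive_indefinite_description _ H)
  | right _ => 0
  end.

(* Limit as y -> +infinity (0 if it does not exist). *)
Definition lim_pinf (g : R -> R) : R :=
  match excluded_middle_informative
     (exists l, forall eps, 0 < eps -> exists N,
        forall y, N < y -> Rabs (g y - l) < eps) with
  | left H => proj1_sig (constructive_indefinite_description _ H)
  | right _ => 0
  end.

Definition Gamma (th : R) : R :=
  lim_pinf (fun N => lim0p (fun h => Rint (fun t => rpow t (th - 1) * exp (- t)) h N)).

(* RL_left th f c d  = J^th_{d^-} f(c) = 1/Gamma(th) int_c^d (s-c)^(th-1) f(s) ds
   RL_right th f c d = J^th_{c^+} f(d) = 1/Gamma(th) int_c^d (d-s)^(th-1) f(s) ds *)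
Definition RL_left (th : R) (f : R -> R) (c d : R) : R :=
  if Req_EM_T c d then 0 else
  / Gamma th * lim0p (fun h => Rint (fun s => rpow (s - c) (th - 1) * f s) (c + h) d).

Definition RL_right (th : R) (f : R -> R) (c d : R) : R :=
  if Req_EM_T c d then 0 else
  / Gamma th * lim0p (fun h => Rint (fun s => rpow (d - s) (th - 1) * f s) c (d - h)).

Definition S_RL (f : R -> R) (m x lam th a b : R) : R :=
  (1 - lam) * rpow m (th - 1) * (rpow (x - a) th + rpow (b - x) th) / (b - a) * f (m * x)
  + lam * rpow m (th - 1) * (rpow (x - a) th * f (m * a) + rpow (b - x) th * f (m * b)) / (b - a)
  - Gamma (th + 1) / (m * (b - a))
      * (RL_left th f (m * a) (m * x) + RL_right th f (m * x) (m * b)).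

Definition alpha_m_convex (alpha m : R) (K : R -> Prop) (g : R -> R) : Prop :=
  forall X Y t, K X -> K Y -> 0 <= t <= 1 -> K (t * X + m * (1 - t) * Y) ->
    g (t * X + m * (1 - t) * Y) <= rpow t alpha * g X + m * (1 - rpow t alpha) * g Y.

Definition is_interval (I : R -> Prop) : Prop :=
  forall x y z, I x -> I z -> x <= y <= z -> I y.

Definition Aconst1 (th lam : R) : R :=
  (2 * th * rpow lam (1 + 1 / th) + 1) / (th + 1) - lam.
Definition Aconst2 (alpha th lam : R) : R :=
  2 * th * rpow lam (1 + (1 + alpha) / th) / ((alpha + 1) * (alpha + th + 1))
  + 1 / (alpha + th + 1) - lam / (alpha + 1).
Definition Aconst3 (alpha th lam : R) : R := Aconst1 th lam - Aconst2 alpha th lam.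

(* Put [mx = m * x].  After the substitutions [s = m a + (mx - m a) t]
   and [s = m b + (mx - m b) t], and [Gamma (th + 1) = th * Gamma th],
   [Gamma (th + 1)] times each Riemann-Liouville integral in [S_f] equals
   [|mx - mY|^th * L_Y] (Y = a, b), where
     L_Y = th * int_0^1 t^(th-1) f(mY + (mx - mY) t) dt;
   hence [S_f] is a combination of the two quantities
   [(1 - lam) f(mx) + lam f(mY) - L_Y].
   For a function [F] on [[0, 1]] with [|F'| <= H], comparing
   [(t^th - lam) F(t) - int_e^t th s^(th-1) F(s) ds] with primitives of
   [|t^th - lam| H] (no integrability of [F'] is needed) gives
     |(1 - lam) F(1) + lam F(0) - th int_0^1 t^(th-1) F| <= int_0^1 |t^th - lam| H.
   On a segment, (alpha, m)-convexity bounds [|f'|] by [H = |mx - mY| v^(1/q)]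
   with [v t = t^alpha |f'(mx)|^q + m (1 - t^alpha) |f'(Y)|^q]; Hoelder's
   inequality against the weight [|t^th - lam|] and the explicit kernel integrals
   [int_0^1 |t^th - lam| t^alpha = A2] and [int_0^1 |t^th - lam| = A1] give the
   constants of the statement. *)

From Coquelicot Require Import Coquelicot.
From Stdlib Require Import Reals Lra Psatz Classical ClassicalEpsilon.
Open Scope R_scope.

Lemma Rpower_pos x y : 0 < Rpower x y.
Proof. apply exp_pos. Qed.

Lemma rpow_pos x y : 0 < x -> rpow x y = Rpower x y.
Proof. intros H; unfold rpow; destruct (Rlt_dec 0 x); [reflexivity|lra]. Qed.

Lemma rpow_0 x : rpow x 0 = 1.
Proof.
  unfold rpow; destruct (Rlt_dec 0 x); [now apply Rpower_O|].
  destruct (Req_EM_T 0 0); [reflexivity|congruence].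
Qed.

Lemma rpow_0_l y : 0 < y -> rpow 0 y = 0.
Proof.
  intros Hy; unfold rpow; destruct (Rlt_dec 0 0); [lra|].
  destruct (Req_EM_T y 0); [lra|reflexivity].
Qed.

Lemma rpow_1 y : rpow 1 y = 1.
Proof. rewrite rpow_pos by lra; unfold Rpower; rewrite ln_1, Rmult_0_r; apply exp_0. Qed.

Lemma rpow_ge0 x y : 0 <= rpow x y.
Proof.
  unfold rpow; destruct (Rlt_dec 0 x); [left; apply Rpower_pos|].
  destruct (Req_EM_T y 0); lra.
Qed.

Lemma rpow_gt0 x y : 0 < x -> 0 < rpow x y.
Proof. intros; rewrite rpow_pos by auto; apply Rpower_pos. Qed.

Lemma rpow_1_r x : 0 <= x -> rpow x 1 = x.
Proof.
  intros Hx; destruct (Rle_lt_or_eq_dec _ _ Hx) as [H| <-].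
  - rewrite rpow_pos by auto; now apply Rpower_1.
  - apply rpow_0_l; lra.
Qed.

Lemma rpow_plus_pos t y z : 0 < t -> rpow t (y + z) = rpow t y * rpow t z.
Proof. intros; rewrite !rpow_pos by auto; apply Rpower_plus. Qed.

Lemma rpow_plus_nonneg x y z : 0 <= x -> 0 < y -> 0 < z -> rpow x (y + z) = rpow x y * rpow x z.
Proof.
  intros Hx Hy Hz; destruct (Rle_lt_or_eq_dec _ _ Hx) as [Hx'| <-].
  - now apply rpow_plus_pos.
  - rewrite !rpow_0_l by lra; ring.
Qed.

Lemma rpow_succ x th : 0 <= x -> 0 < th -> rpow x (th + 1) = x * rpow x th.
Proof. intros; rewrite rpow_plus_nonneg, rpow_1_r by lra; ring. Qed.

Lemma rpow_mult_distr x y z : 0 <= x -> 0 <= y -> 0 < z ->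
  rpow (x * y) z = rpow x z * rpow y z.
Proof.
  intros Hx Hy Hz.
  destruct (Rle_lt_or_eq_dec _ _ Hx) as [Hx'| <-];
    [destruct (Rle_lt_or_eq_dec _ _ Hy) as [Hy'| <-]|].
  - rewrite !rpow_pos by nra; now rewrite Rpower_mult_distr.
  - rewrite Rmult_0_r, !rpow_0_l by lra; ring.
  - rewrite Rmult_0_l, !rpow_0_l by lra; ring.
Qed.

Lemma rpow_mult x y z : 0 <= x -> y <> 0 -> y * z <> 0 ->
  rpow (rpow x y) z = rpow x (y * z).
Proof.
  intros Hx Hy Hyz; destruct (Rle_lt_or_eq_dec _ _ Hx) as [Hx'| <-].
  - rewrite (rpow_pos x), rpow_pos, rpow_pos by (auto || apply Rpower_pos).
    apply Rpower_mult.
  - assert (z <> 0) by (intro; subst; apply Hyz; ring).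
    unfold rpow; destruct (Rlt_dec 0 0); [lra|].
    destruct (Req_EM_T y 0), (Req_EM_T (y * z) 0); try contradiction.
    destruct (Rlt_dec 0 0); [lra|]; destruct (Req_EM_T z 0); [contradiction|reflexivity].
Qed.

Lemma rpow_rpow_inverse y s r : 0 <= y -> s * r = 1 -> rpow (rpow y s) r = y.
Proof.
  intros Hy Hsr; assert (s <> 0) by (intros ->; lra).
  rewrite rpow_mult, Hsr by (auto; rewrite Hsr; lra); now apply rpow_1_r.
Qed.

Lemma rpow_le_l x y c : 0 <= c -> 0 <= x <= y -> rpow x c <= rpow y c.
Proof.
  intros Hc [Hx Hxy]; destruct (Req_dec c 0) as [->|Hc0]; [rewrite !rpow_0; lra|].
  destruct (Rle_lt_or_eq_dec _ _ Hx) as [Hx'| <-].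
  - rewrite !rpow_pos by lra; apply Rle_Rpower_l; lra.
  - rewrite rpow_0_l by lra; apply rpow_ge0.
Qed.

Lemma rpow_lt_l x y c : 0 < c -> 0 <= x < y -> rpow x c < rpow y c.
Proof.
  intros Hc [Hx Hxy]; destruct (Rle_lt_or_eq_dec _ _ Hx) as [Hx'| <-].
  - rewrite !rpow_pos by lra; apply Rlt_Rpower_l; lra.
  - rewrite rpow_0_l by lra; apply rpow_gt0; lra.
Qed.

Lemma rpow_le_1 t y : 0 <= y -> 0 <= t <= 1 -> rpow t y <= 1.
Proof. intros; rewrite <- (rpow_1 y); apply rpow_le_l; lra. Qed.

Lemma continuity_const c x : continuity_pt (fun _ => c) x.
Proof. apply continuity_pt_const; now intros ? ?. Qed.

Lemma deriv_rpow x r : 0 < x ->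
  derivable_pt_lim (fun t => rpow t r) x (r * rpow x (r - 1)).
Proof.
  intros Hx; rewrite rpow_pos by auto.
  apply derivable_pt_lim_locally_ext with (f := fun t => Rpower t r) (a := 0) (b := x + 1);
    [lra| intros; rewrite rpow_pos; lra|].
  now apply derivable_pt_lim_power.
Qed.

Lemma continuity_rpow_pos x r : 0 < x -> continuity_pt (fun t => rpow t r) x.
Proof.
  intros Hx; apply derivable_continuous_pt; eexists; now apply deriv_rpow.
Qed.

Lemma continuity_rpow x r : 0 <= r -> continuity_pt (fun t => rpow t r) x.
Proof.
  intros Hr; destruct (Req_dec r 0) as [->|Hr0].
  { apply continuity_pt_ext with (f := fun _ => 1); [intros; now rewrite rpow_0|].
    apply continuity_const. }
  destruct (Rlt_dec 0 x) as [Hx|Hx]; [now apply continuity_rpow_pos|].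
  destruct (Req_dec x 0) as [->|Hx0].
  - intros eps Heps; exists (Rpower eps (/ r)); split; [apply Rpower_pos|].
    intros y [_ Hy]; simpl in *; unfold R_dist in *.
    rewrite rpow_0_l, Rminus_0_r in * by lra.
    destruct (Rlt_dec 0 y) as [Hy0|Hy0].
    + rewrite Rabs_right in * by (apply Rle_ge, rpow_ge0 || lra).
      rewrite <- (rpow_rpow_inverse eps (/ r) r) by (lra || apply Rinv_l; lra).
      rewrite (rpow_pos eps) by lra.
      apply rpow_lt_l; lra.
    + unfold rpow; destruct (Rlt_dec 0 y); [lra|].
      destruct (Req_EM_T r 0); [lra|]; rewrite Rabs_R0; lra.
  - apply continuity_pt_locally_ext with (f := fun _ => 0) (a := - x); [lra| |].
    + intros y Hy; unfold Rdist in Hy; apply Rabs_def2 in Hy.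
      unfold rpow; destruct (Rlt_dec 0 y); [lra|].
      destruct (Req_EM_T r 0); [lra|reflexivity].
    + apply continuity_const.
Qed.

Lemma continuity_kernel th lam x : 0 <= th -> continuity_pt (fun t => Rabs (rpow t th - lam)) x.
Proof.
  intros Hth; apply continuity_pt_comp with (f2 := Rabs); [|apply Rcontinuity_abs].
  apply continuity_pt_minus; [now apply continuity_rpow|apply continuity_const].
Qed.

Definition lim0 (g : R -> R) (l : R) := forall eps, 0 < eps -> exists del, 0 < del /\
  forall h, 0 < h < del -> Rabs (g h - l) < eps.
Definition limi (g : R -> R) (l : R) := forall eps, 0 < eps -> exists N,
  forall y, N < y -> Rabs (g y - l) < eps.

Lemma lim0_le g l d B : 0 < d -> lim0 g l -> (forall h, 0 < h < d -> g h <= B) -> l <= B.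
Proof.
  intros Hd H Hb; apply Rnot_lt_le; intros Hc.
  destruct (H (l - B)) as [d1 [Hd1 P]]; [lra|].
  pose proof (Rmin_l d d1); pose proof (Rmin_r d d1); pose proof (Rmin_pos d d1 Hd Hd1).
  specialize (P (Rmin d d1 / 2) ltac:(lra)); specialize (Hb (Rmin d d1 / 2) ltac:(lra)).
  apply Rabs_def2 in P; lra.
Qed.

Lemma lim0_ext g1 g2 l d : 0 < d -> (forall h, 0 < h < d -> g1 h = g2 h) ->
  lim0 g1 l -> lim0 g2 l.
Proof.
  intros Hd He H eps Heps; destruct (H eps Heps) as [d1 [Hd1 P]].
  exists (Rmin d d1); split; [now apply Rmin_pos|].
  intros h Hh; pose proof (Rmin_l d d1); pose proof (Rmin_r d d1).
  rewrite <- He by lra; apply P; lra.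
Qed.

Lemma lim0_const c : lim0 (fun _ => c) c.
Proof. intros eps Heps; exists 1; split; [lra|]; intros; now rewrite Rminus_diag, Rabs_R0. Qed.

Lemma lim0_plus g1 g2 l1 l2 : lim0 g1 l1 -> lim0 g2 l2 ->
  lim0 (fun h => g1 h + g2 h) (l1 + l2).
Proof.
  intros H1 H2 eps Heps.
  destruct (H1 (eps / 2)) as [d1 [Hd1 P1]]; [lra|].
  destruct (H2 (eps / 2)) as [d2 [Hd2 P2]]; [lra|].
  exists (Rmin d1 d2); split; [now apply Rmin_pos|].
  intros h Hh; pose proof (Rmin_l d1 d2); pose proof (Rmin_r d1 d2).
  specialize (P1 h ltac:(lra)); specialize (P2 h ltac:(lra)).
  replace (g1 h + g2 h - (l1 + l2)) with ((g1 h - l1) + (g2 h - l2)) by ring.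
  pose proof (Rabs_triang (g1 h - l1) (g2 h - l2)); lra.
Qed.

Lemma lim0_scal c g l : lim0 g l -> lim0 (fun h => c * g h) (c * l).
Proof.
  intros H eps Heps; pose proof (Rabs_pos c).
  destruct (H (eps / (Rabs c + 1))) as [d [Hd P]]; [apply Rdiv_lt_0_compat; lra|].
  exists d; split; [auto|]; intros h Hh; specialize (P h Hh).
  replace (c * g h - c * l) with (c * (g h - l)) by ring; rewrite Rabs_mult.
  apply Rmult_lt_compat_r with (r := Rabs c + 1) in P; [|lra].
  replace (eps / (Rabs c + 1) * (Rabs c + 1)) with eps in P by (field; lra).
  pose proof (Rabs_pos (g h - l)); nra.
Qed.

Lemma lim0_cont g : continuity_pt g 0 -> lim0 g (g 0).
Proof.
  intros H eps Heps; destruct (H eps Heps) as [d [Hd P]]; exists d; split; [auto|].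
  intros h Hh; apply P; split; [split; [exact I|lra]|].
  simpl; unfold R_dist; rewrite Rminus_0_r, Rabs_right; lra.
Qed.

Lemma lim0_comp_scal g l D : 0 < D -> lim0 g l -> lim0 (fun h => g (h / D)) l.
Proof.
  intros HD H eps Heps; destruct (H eps Heps) as [d [Hd P]].
  exists (d * D); split; [nra|]; intros h Hh; apply P; split.
  - apply Rdiv_lt_0_compat; lra.
  - apply Rmult_lt_reg_r with D; auto; unfold Rdiv; rewrite Rmult_assoc, Rinv_l; lra.
Qed.

Lemma lim0_abs_le g l B d : 0 < d -> lim0 g l ->
  (forall h, 0 < h < d -> Rabs (g h) <= B) -> Rabs l <= B.
Proof.
  intros Hd H Hb; apply Rabs_le; split.
  - assert (- l <= B); [|lra].
    replace (- l) with (-1 * l) by ring.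
    apply (lim0_le (fun h => -1 * g h) _ d); [auto|now apply lim0_scal|].
    intros h Hh; specialize (Hb h Hh); apply Rabs_le_between in Hb; lra.
  - apply (lim0_le g l d); auto.
    intros h Hh; specialize (Hb h Hh); apply Rabs_le_between in Hb; lra.
Qed.

Lemma lim0_unique g l1 l2 : lim0 g l1 -> lim0 g l2 -> l1 = l2.
Proof.
  intros H1 H2.
  assert (Hd : lim0 (fun h => g h + -1 * g h) (l1 + -1 * l2))
    by (apply lim0_plus; [|apply lim0_scal]; auto).
  assert (Rabs (l1 + -1 * l2) <= 0); [|apply Rabs_le_between in H; lra].
  apply (lim0_abs_le _ _ _ 1 ltac:(lra) Hd).
  intros; replace (g h + -1 * g h) with 0 by ring; rewrite Rabs_R0; lra.
Qed.

Lemma lim0p_eq g l : lim0 g l -> lim0p g = l.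
Proof.
  intros H; unfold lim0p; destruct excluded_middle_informative as [E|E].
  - destruct constructive_indefinite_description as [l' Hl']; simpl.
    now apply (lim0_unique g).
  - exfalso; apply E; now exists l.
Qed.

Lemma lim0_monotone g d0 B : 0 < d0 ->
  (forall h1 h2, 0 < h1 <= h2 -> h2 < d0 -> g h2 <= g h1) ->
  (forall h, 0 < h < d0 -> g h <= B) -> exists l, lim0 g l.
Proof.
  intros Hd Hmono Hb.
  set (E := fun y => exists h, 0 < h < d0 /\ y = g h).
  assert (HE : bound E) by (exists B; intros y [h [Hh ->]]; auto).
  assert (HE2 : exists y, E y) by (exists (g (d0 / 2)), (d0 / 2); split; [lra|auto]).
  destruct (completeness E HE HE2) as [l [Hub Hlub]].
  exists l; intros eps Heps.
  assert (exists h1, 0 < h1 < d0 /\ l - eps < g h1) as [h1 [Hh1 Hg1]].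
  { apply NNPP; intros Hn.
    assert (l <= l - eps); [|lra].
    apply Hlub; intros y [h [Hh ->]].
    apply Rnot_lt_le; intros Hc; apply Hn; now exists h. }
  exists h1; split; [lra|]; intros h Hh.
  assert (g h <= l) by (apply Hub; exists h; split; [lra|auto]).
  assert (g h1 <= g h) by (apply Hmono; lra).
  apply Rabs_def1; lra.
Qed.

Lemma limi_lim0_inv g l : limi g l <-> lim0 (fun h => g (/ h)) l.
Proof.
  split; intros H eps Heps; destruct (H eps Heps) as [N HN].
  - pose proof (Rmax_l N 1); pose proof (Rmax_r N 1).
    exists (/ Rmax N 1); split; [apply Rinv_0_lt_compat; lra|].
    intros h Hh; apply HN.
    apply Rle_lt_trans with (Rmax N 1); [lra|].
    rewrite <- (Rinv_inv (Rmax N 1)); apply Rinv_lt_contravar; [|lra].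
    apply Rmult_lt_0_compat; [lra|apply Rinv_0_lt_compat; lra].
  - destruct HN as [Hd HN]; exists (/ N); intros y Hy.
    assert (Hy0 : 0 < y) by (pose proof (Rinv_0_lt_compat N Hd); lra).
    rewrite <- (Rinv_inv y); apply HN; split; [now apply Rinv_0_lt_compat|].
    rewrite <- (Rinv_inv N); apply Rinv_lt_contravar; [|auto].
    apply Rmult_lt_0_compat; [now apply Rinv_0_lt_compat|lra].
Qed.

Lemma lim_pinf_eq g l : limi g l -> lim_pinf g = l.
Proof.
  intros H; unfold lim_pinf; destruct excluded_middle_informative as [E|E].
  - destruct constructive_indefinite_description as [l' Hl']; simpl.
    apply limi_lim0_inv in H, Hl'; now apply (lim0_unique (fun h => g (/ h))).
  - exfalso; apply E; now exists l.
Qed.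

Lemma limi_const c : limi (fun _ => c) c.
Proof. apply limi_lim0_inv, lim0_const. Qed.

Lemma limi_plus g1 g2 l1 l2 : limi g1 l1 -> limi g2 l2 ->
  limi (fun y => g1 y + g2 y) (l1 + l2).
Proof. rewrite !limi_lim0_inv; apply lim0_plus. Qed.

Lemma limi_scal c g l : limi g l -> limi (fun y => c * g y) (c * l).
Proof. rewrite !limi_lim0_inv; apply lim0_scal. Qed.

Lemma limi_ext g1 g2 l N : 0 < N -> (forall y, N < y -> g1 y = g2 y) ->
  limi g1 l -> limi g2 l.
Proof.
  rewrite !limi_lim0_inv; intros HN He; apply lim0_ext with (/ N);
    [now apply Rinv_0_lt_compat|].
  intros h Hh; apply He; rewrite <- (Rinv_inv N); apply Rinv_lt_contravar; [nra|lra].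
Qed.

Lemma limi_ge g l N B : 0 < N -> limi g l -> (forall y, N < y -> B <= g y) -> B <= l.
Proof.
  rewrite limi_lim0_inv; intros HN H Hb.
  assert (-1 * l <= - B); [|lra].
  apply (lim0_le (fun h => -1 * g (/ h)) _ (/ N)); [now apply Rinv_0_lt_compat|now apply lim0_scal|].
  intros h Hh; assert (B <= g (/ h)); [|lra].
  apply Hb; rewrite <- (Rinv_inv N); apply Rinv_lt_contravar; [nra|lra].
Qed.

Lemma limi_monotone g B : (forall y1 y2, 1 < y1 <= y2 -> g y1 <= g y2) ->
  (forall y, 1 < y -> g y <= B) -> exists l, limi g l.
Proof.
  intros Hmono Hb.
  assert (Hinv : forall h, 0 < h < 1 -> 1 < / h)
    by (intros h Hh; rewrite <- Rinv_1; apply Rinv_lt_contravar; lra).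
  destruct (lim0_monotone (fun h => g (/ h)) 1 B) as [l Hl]; [lra| |intros; now apply Hb, Hinv|].
  - intros h1 h2 Hh Hh2; apply Hmono; split; [apply Hinv; lra|].
    apply Rinv_le_contravar; lra.
  - exists l; now apply limi_lim0_inv.
Qed.

Lemma limi_squeeze g K : (forall y, 1 < y -> 0 <= g y <= K / y) -> limi g 0.
Proof.
  intros Hg eps Heps; pose proof (Rmax_l 1 (Rabs K / eps)); pose proof (Rmax_r 1 (Rabs K / eps)).
  exists (Rmax 1 (Rabs K / eps)); intros y Hy.
  specialize (Hg y ltac:(lra)); rewrite Rminus_0_r, Rabs_right by lra.
  apply Rle_lt_trans with (Rabs K / y).
  - unfold Rdiv; pose proof (Rle_abs K); pose proof (Rinv_0_lt_compat y ltac:(lra)); nra.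
  - apply (Rmult_lt_reg_r y); [lra|]; unfold Rdiv; rewrite Rmult_assoc, Rinv_l, Rmult_1_r by lra.
    apply (Rmult_lt_reg_r (/ eps)); [now apply Rinv_0_lt_compat|].
    replace (eps * y * / eps) with y by (field; lra); unfold Rdiv in *; lra.
Qed.

Definition cont_on (f : R -> R) a b := forall x, a <= x <= b -> continuity_pt f x.

Lemma cont_on_sub f a b c d : a <= c -> d <= b -> cont_on f a b -> cont_on f c d.
Proof. intros ? ? H x Hx; apply H; lra. Qed.

Lemma ex_RInt_cont f a b : a <= b -> cont_on f a b -> ex_RInt f a b.
Proof.
  intros Hab H; apply (ex_RInt_continuous (V := R_CompleteNormedModule)); intros z Hz.
  rewrite Rmin_left, Rmax_right in Hz by lra; apply continuity_pt_filterlim, H; auto.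
Qed.

Lemma ex_RInt_cont_everywhere f a b : (forall x, continuity_pt f x) -> ex_RInt f a b.
Proof.
  intros H; apply (ex_RInt_continuous (V := R_CompleteNormedModule)).
  intros; now apply continuity_pt_filterlim.
Qed.

Lemma Rint_RInt g c d : ex_RInt g c d -> Rint g c d = RInt g c d.
Proof.
  intros H; unfold Rint; destruct excluded_middle_informative as [E|E].
  - now rewrite (RInt_Reals g c d (epsilon E (fun _ => True))).
  - exfalso; apply E; constructor; now apply ex_RInt_Reals_0.
Qed.

(* Specializations of Coquelicot's linearity lemmas to real-valued functions,
   stated with [+], [-], [*] so that they can be used for rewriting. *)
Lemma RInt_plusR f g a b : ex_RInt f a b -> ex_RInt g a b ->
  RInt (fun x => f x + g x) a b = RInt f a b + RInt g a b.
Proof. intros Hf Hg; exact (RInt_plus f g a b Hf Hg). Qed.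
Lemma RInt_minusR f g a b : ex_RInt f a b -> ex_RInt g a b ->
  RInt (fun x => f x - g x) a b = RInt f a b - RInt g a b.
Proof. intros Hf Hg; exact (RInt_minus f g a b Hf Hg). Qed.
Lemma RInt_scalR f c a b : ex_RInt f a b -> RInt (fun x => c * f x) a b = c * RInt f a b.
Proof. intros Hf; exact (RInt_scal f a b c Hf). Qed.
Lemma ex_RInt_scalR f c a b : ex_RInt f a b -> ex_RInt (fun x => c * f x) a b.
Proof. intros Hf; exact (ex_RInt_scal (V := R_NormedModule) f a b c Hf). Qed.
Lemma RInt_ChaslesR f a b c : ex_RInt f a b -> ex_RInt f b c ->
  RInt f a b + RInt f b c = RInt f a c.
Proof. intros H1 H2; exact (RInt_Chasles f a b c H1 H2). Qed.
Lemma RInt_comp_linR (g : R -> R) u v a b : ex_RInt g (u * a + v) (u * b + v) ->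
  RInt (fun y => u * g (u * y + v)) a b = RInt g (u * a + v) (u * b + v).
Proof. intros H; exact (RInt_comp_lin g u v a b H). Qed.
Lemma RInt_swapR (g : R -> R) a b : ex_RInt g a b -> - RInt g a b = RInt g b a.
Proof. intros H; exact (opp_RInt_swap g a b H). Qed.
Lemma RInt_extR (f g : R -> R) a b : (forall x, Rmin a b < x < Rmax a b -> f x = g x) ->
  RInt f a b = RInt g a b.
Proof. intros H; now apply RInt_ext. Qed.

(* Rewriting with Coquelicot's lemmas may leave equations stated over one of its
   structures whose carrier is R; [as_R_eq] restates [a = b] as [a - b = 0] over
   R, on which [ring] and [field] work. *)
Ltac as_R_eq := match goal with |- @eq _ ?a ?b => change (@eq R a b) end;
  apply Rminus_diag_uniq.

Lemma FTC f df a b : a <= b ->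
  (forall x, a <= x <= b -> derivable_pt_lim f x (df x)) -> cont_on df a b ->
  RInt df a b = f b - f a.
Proof.
  intros Hab Hd Hc; apply is_RInt_unique, (is_RInt_derive f df a b);
    intros x Hx; rewrite Rmin_left, Rmax_right in Hx by lra.
  - now apply is_derive_Reals, Hd.
  - now apply continuity_pt_filterlim, Hc.
Qed.

Lemma RInt_lower_bound_cont f a b : a < b -> cont_on f a b ->
  forall eps, 0 < eps -> exists del, 0 < del /\ forall e, a < e < a + del -> e <= b ->
  Rabs (RInt f e b - RInt f a b) < eps.
Proof.
  intros Hab Hc eps Heps.
  destruct (continuity_ab_maj (fun x => Rabs (f x)) a b (Rlt_le _ _ Hab)) as [xm [Hm Hxm]].
  { intros x Hx; apply continuity_pt_comp with (f2 := Rabs); [now apply Hc|apply Rcontinuity_abs]. }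
  set (M := Rabs (f xm) + 1); assert (HM : 0 < M) by (unfold M; pose proof (Rabs_pos (f xm)); lra).
  exists (eps / M); split; [now apply Rdiv_lt_0_compat|]; intros e He Heb.
  rewrite <- (RInt_ChaslesR f a e b) by (apply ex_RInt_cont; [lra|apply (cont_on_sub f a b); auto; lra]).
  replace (RInt f e b - (RInt f a e + RInt f e b)) with (- RInt f a e) by ring.
  rewrite Rabs_Ropp; eapply Rle_lt_trans; [apply (abs_RInt_le_const f a e M)|]; [lra| |..].
  - apply ex_RInt_cont; [lra|apply (cont_on_sub f a b); auto; lra].
  - intros x Hx; assert (Rabs (f x) <= Rabs (f xm)) by (apply Hm; lra); unfold M; lra.
  - apply (Rmult_lt_reg_r (/ M)); [now apply Rinv_0_lt_compat|].
    replace ((e - a) * M * / M) with (e - a) by (field; lra); unfold Rdiv in He; lra.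
Qed.

Lemma FTC_left_open f df a b : a <= b -> continuity_pt f a ->
  (forall x, a < x <= b -> derivable_pt_lim f x (df x)) -> cont_on df a b ->
  RInt df a b = f b - f a.
Proof.
  intros Hab' Hfa Hd Hc.
  destruct (Rle_lt_or_eq_dec _ _ Hab') as [Hab| <-];
    [|rewrite RInt_point, Rminus_diag; reflexivity].
  apply Rminus_diag_uniq, Rabs_eq_0.
  destruct (Rle_lt_or_eq_dec 0 (Rabs (RInt df a b - (f b - f a))) (Rabs_pos _)) as [Hp|Hp]; [|auto].
  exfalso; set (eps := Rabs (RInt df a b - (f b - f a))).
  destruct (RInt_lower_bound_cont df a b Hab Hc (eps / 2)) as [d1 [Hd1 P1]];
    [unfold eps; lra|].
  destruct (Hfa (eps / 2)) as [d2 [Hd2 P2]]; [unfold eps; lra|].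
  set (d := Rmin (Rmin d1 d2) (b - a)).
  assert (0 < d) by (repeat apply Rmin_pos; lra).
  assert (d <= d1 /\ d <= d2 /\ d <= b - a) as (? & ? & ?).
  { pose proof (Rmin_l (Rmin d1 d2) (b - a)); pose proof (Rmin_r (Rmin d1 d2) (b - a)).
    pose proof (Rmin_l d1 d2); pose proof (Rmin_r d1 d2); unfold d; lra. }
  set (e := a + d / 2).
  assert (HI : RInt df e b = f b - f e).
  { apply FTC; [unfold e; lra|intros x Hx; apply Hd; unfold e in *; lra|].
    apply (cont_on_sub df a b); auto; unfold e; lra. }
  assert (Rabs (RInt df e b - RInt df a b) < eps / 2) by (apply P1; unfold e; lra).
  assert (Rabs (f e - f a) < eps / 2).
  { apply P2; split; [split; [exact I|unfold e; lra]|].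
    simpl; unfold R_dist; rewrite Rabs_right; unfold e; lra. }
  assert (eps <= Rabs (RInt df e b - RInt df a b) + Rabs (f e - f a)); [|lra].
  unfold eps; replace (RInt df a b - (f b - f a))
    with (- (RInt df e b - RInt df a b) + - (f e - f a)) by (rewrite HI; ring).
  eapply Rle_trans; [apply Rabs_triang|]; rewrite !Rabs_Ropp; lra.
Qed.

Lemma deriv_primitive H u s : (forall x, continuity_pt H x) ->
  derivable_pt_lim (fun t => RInt H u t) s (H s).
Proof.
  intros Hc; apply is_derive_Reals, (is_derive_RInt H (fun t => RInt H u t) u s).
  - apply filter_forall; intros t; apply (RInt_correct (V := R_CompleteNormedModule)).
    now apply ex_RInt_cont_everywhere.
  - now apply continuity_pt_filterlim.
Qed.

Lemma nondecreasing_of_deriv f df u v : u <= v ->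
  (forall x, u <= x <= v -> derivable_pt_lim f x (df x)) ->
  (forall x, u <= x <= v -> 0 <= df x) -> f u <= f v.
Proof.
  intros Huv Hd Hp; destruct (Rle_lt_or_eq_dec _ _ Huv) as [Hl| ->]; [|lra].
  destruct (MVT_cor2 f df u v Hl Hd) as [c [Hc Hc2]].
  assert (0 <= df c) by (apply Hp; lra); nra.
Qed.

(* Increment bound: if [|F'| <= H] on [[u, v]] with [H] continuous, then
   [|F v - F u| <= int_u^v H].  No integrability of [F'] is needed: compare [F]
   with the primitives of [H] by monotonicity. *)
Lemma increment_bound F dF H u v : u <= v ->
  (forall t, u <= t <= v -> derivable_pt_lim F t (dF t)) ->
  (forall t, u <= t <= v -> Rabs (dF t) <= H t) ->
  (forall x, continuity_pt H x) ->
  Rabs (F v - F u) <= RInt H u v.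
Proof.
  intros Huv HF Hd Hc.
  assert (A1 : RInt H u u - F u <= RInt H u v - F v).
  { apply (nondecreasing_of_deriv (fun t => RInt H u t - F t) (fun t => H t - dF t)); auto.
    - intros x Hx; apply derivable_pt_lim_minus; [now apply deriv_primitive|now apply HF].
    - intros x Hx; specialize (Hd x Hx); apply Rabs_le_between in Hd; lra. }
  assert (A2 : RInt H u u + F u <= RInt H u v + F v).
  { apply (nondecreasing_of_deriv (fun t => RInt H u t + F t) (fun t => H t + dF t)); auto.
    - intros x Hx; apply derivable_pt_lim_plus; [now apply deriv_primitive|now apply HF].
    - intros x Hx; specialize (Hd x Hx); apply Rabs_le_between in Hd; lra. }
  assert (E0 : RInt H u u = 0) by (rewrite RInt_point; reflexivity).
  apply Rabs_le; lra.
Qed.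

Lemma integration_by_parts f df g dg a b : a <= b ->
  (forall x, a <= x <= b -> derivable_pt_lim f x (df x)) ->
  (forall x, a <= x <= b -> derivable_pt_lim g x (dg x)) ->
  cont_on df a b -> cont_on dg a b ->
  RInt (fun x => df x * g x) a b = f b * g b - f a * g a - RInt (fun x => f x * dg x) a b.
Proof.
  intros Hab Hf Hg Hcf Hcg.
  assert (Hcf0 : cont_on f a b)
    by (intros x Hx; apply derivable_continuous_pt; exists (df x); now apply Hf).
  assert (Hcg0 : cont_on g a b)
    by (intros x Hx; apply derivable_continuous_pt; exists (dg x); now apply Hg).
  assert (E : RInt (fun x => df x * g x + f x * dg x) a b = f b * g b - f a * g a).
  { apply (FTC (fun x => f x * g x)); auto.
    - intros x Hx; apply derivable_pt_lim_mult; auto.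
    - intros x Hx; apply continuity_pt_plus; apply continuity_pt_mult; auto. }
  rewrite RInt_plusR in E; [lra| |];
    apply ex_RInt_cont; auto; intros x Hx; apply continuity_pt_mult; auto.
Qed.

Lemma RInt_power th e b : 0 < e <= b ->
  RInt (fun t => th * rpow t (th - 1)) e b = rpow b th - rpow e th.
Proof.
  intros He; apply (FTC (fun t => rpow t th)); [lra|intros; apply deriv_rpow; lra|].
  intros x Hx; apply continuity_pt_mult; [apply continuity_const|].
  apply continuity_rpow_pos; lra.
Qed.

Lemma RInt_rpow th e b : 0 < th -> 0 < e <= b ->
  RInt (fun t => rpow t (th - 1)) e b = (rpow b th - rpow e th) / th.
Proof.
  intros Hth He.
  assert (Hex : ex_RInt (fun t => rpow t (th - 1)) e b).
  { apply ex_RInt_cont; [lra|]; intros x Hx; apply continuity_rpow_pos; lra. }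
  rewrite <- RInt_power by auto; rewrite (RInt_scalR (fun t => rpow t (th - 1))) by auto.
  as_R_eq; field; lra.
Qed.

(** * The basic estimate on [[0, 1]] *)

Lemma continuity_clamp u v x : continuity_pt (fun t => Rmax u (Rmin t v)) x.
Proof.
  apply continuity_pt_ext with
    (f := fun t => (u + (t + v - Rabs (t - v)) / 2 + Rabs (u - (t + v - Rabs (t - v)) / 2)) / 2).
  - intros t; unfold Rmax, Rmin; destruct (Rle_dec t v); destruct Rle_dec;
      unfold Rabs; repeat destruct Rcase_abs; lra.
  - reg.
Qed.

(* Clamping to [[u, v]] turns a function continuous on [[u, v]] into a function
   continuous everywhere, which is what [deriv_primitive] needs. *)
Lemma continuity_clamped g u v : u <= v -> cont_on g u v ->
  forall x, continuity_pt (fun t => g (Rmax u (Rmin t v))) x.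
Proof.
  intros Huv Hg x; apply continuity_pt_comp with (f2 := g); [apply continuity_clamp|].
  apply Hg; split; [apply Rmax_l|apply Rmax_lub; [lra|apply Rmin_r]].
Qed.

(* Indeed [k F - int_e^. k' F] has derivative [k F'], bounded by [|k| H]. *)
Lemma kernel_parts_bound th lam F dF H e b : 0 < th -> 0 < e <= b ->
  (forall t, e <= t <= b -> derivable_pt_lim F t (dF t)) ->
  (forall t, e <= t <= b -> Rabs (dF t) <= H t) ->
  (forall x, continuity_pt H x) ->
  Rabs ((rpow b th - lam) * F b - (rpow e th - lam) * F e
        - th * RInt (fun t => rpow t (th - 1) * F t) e b)
  <= RInt (fun t => Rabs (rpow t th - lam) * H t) e b.
Proof.
  intros Hth He HF Hd Hc.
  set (k := fun t => rpow t th - lam).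
  set (g := fun t => th * rpow t (th - 1) * F t).
  set (gc := fun t => g (Rmax e (Rmin t b))).
  assert (Hgc : forall t, e <= t <= b -> gc t = g t).
  { intros t Ht; unfold gc; f_equal; rewrite Rmin_left, Rmax_right; lra. }
  assert (Cgc : forall x, continuity_pt gc x).
  { apply continuity_clamped; [lra|]; intros x Hx; apply continuity_pt_mult;
      [apply continuity_pt_mult; [apply continuity_const|apply continuity_rpow_pos; lra]|].
    apply derivable_continuous_pt; eexists; now apply HF. }
  set (Phi := fun t => k t * F t - RInt gc e t).
  assert (HPhi : Rabs (Phi b - Phi e) <= RInt (fun t => Rabs (k t) * H t) e b).
  { apply (increment_bound Phi (fun t => k t * dF t)); [lra| | |].
    - intros t Ht; unfold Phi.
      replace (k t * dF t) with (th * rpow t (th - 1) * F t + k t * dF t - gc t)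
        by (rewrite Hgc by auto; unfold g; ring).
      apply derivable_pt_lim_minus; [apply derivable_pt_lim_mult; [|now apply HF]|].
      + replace (th * rpow t (th - 1)) with (th * rpow t (th - 1) - 0) by ring.
        apply derivable_pt_lim_minus; [apply deriv_rpow; lra|apply derivable_pt_lim_const].
      + now apply deriv_primitive.
    - intros t Ht; rewrite Rabs_mult; apply Rmult_le_compat_l; [apply Rabs_pos|auto].
    - intros x; apply continuity_pt_mult; [|auto].
      apply continuity_kernel; lra. }
  assert (E0 : RInt gc e e = 0) by (rewrite RInt_point; reflexivity).
  assert (E1 : RInt gc e b = th * RInt (fun t => rpow t (th - 1) * F t) e b).
  { rewrite (RInt_extR gc (fun t => th * (rpow t (th - 1) * F t))).
    - apply RInt_scalR, ex_RInt_cont; [lra|]; intros x Hx.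
      apply continuity_pt_mult; [apply continuity_rpow_pos; lra|].
      apply derivable_continuous_pt; eexists; now apply HF.
    - intros t Ht; rewrite Rmin_left, Rmax_right in Ht by lra.
      rewrite Hgc by lra; unfold g; as_R_eq; ring. }
  unfold Phi in HPhi; rewrite E0, E1 in HPhi; unfold k in HPhi.
  replace ((rpow b th - lam) * F b - (rpow e th - lam) * F e
           - th * RInt (fun t => rpow t (th - 1) * F t) e b)
    with ((rpow b th - lam) * F b - th * RInt (fun t => rpow t (th - 1) * F t) e b
          - ((rpow e th - lam) * F e - 0)) by ring.
  exact HPhi.
Qed.

Lemma improper_nonneg_at_0 th C w : 0 < th ->
  (forall x, 0 < x <= 1 -> continuity_pt w x) ->
  (forall t, 0 < t <= 1 -> 0 <= w t <= C * rpow t (th - 1)) ->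
  exists l, lim0 (fun e => RInt w e 1) l.
Proof.
  intros Hth Cw Hw.
  assert (HC : 0 <= C) by (specialize (Hw 1 ltac:(lra)); rewrite rpow_1 in Hw; lra).
  assert (Hex : forall a b, 0 < a -> a <= b <= 1 -> ex_RInt w a b)
    by (intros a b Ha Hab; apply ex_RInt_cont; [lra|]; intros x Hx; apply Cw; lra).
  apply (lim0_monotone _ 1 (C / th)); [lra| |].
  - intros h1 h2 Hh Hh2; rewrite <- (RInt_ChaslesR w h1 h2 1) by (apply Hex; lra).
    assert (0 <= RInt w h1 h2); [|lra].
    apply RInt_ge_0; [lra|apply Hex; lra|intros; apply Hw; lra].
  - intros h Hh.
    assert (Hexp : ex_RInt (fun t => rpow t (th - 1)) h 1)
      by (apply ex_RInt_cont; [lra|]; intros x Hx; apply continuity_rpow_pos; lra).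
    apply Rle_trans with (RInt (fun t => C * rpow t (th - 1)) h 1).
    + apply RInt_le; [lra|apply Hex; lra|now apply ex_RInt_scalR|intros; apply Hw; lra].
    + rewrite RInt_scalR, RInt_rpow, rpow_1 by (auto || lra).
      pose proof (rpow_ge0 h th); pose proof (Rinv_0_lt_compat th Hth).
      assert (0 <= C * rpow h th * / th) by (apply Rmult_le_pos; [apply Rmult_le_pos|]; lra).
      unfold Rdiv; nra.
Qed.

(* For [F] continuous on [[0, 1]] the improper integral [int_0^1 t^(th-1) F(t) dt]
   converges: shifting [F] by a bound [M] of [|F|] makes the integrand
   nonnegative, and [int_e^1 M t^(th-1) dt = M (1 - e^th)/th] converges. *)
Lemma improper_integral_at_0 th F : 0 < th -> cont_on F 0 1 ->
  exists L, lim0 (fun e => RInt (fun t => rpow t (th - 1) * F t) e 1) L.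
Proof.
  intros Hth HF.
  destruct (continuity_ab_maj (fun x => Rabs (F x)) 0 1 ltac:(lra)) as [xm [Hm _]].
  { intros x Hx; apply continuity_pt_comp with (f2 := Rabs); [now apply HF|apply Rcontinuity_abs]. }
  set (M := Rabs (F xm)).
  assert (HFM : forall t, 0 <= t <= 1 -> - M <= F t <= M)
    by (intros t Ht; apply Rabs_le_between, Hm, Ht).
  destruct (improper_nonneg_at_0 th (2 * M) (fun t => rpow t (th - 1) * (F t + M)) Hth)
    as [l Hl].
  { intros x Hx; apply continuity_pt_mult; [apply continuity_rpow_pos; lra|].
    apply continuity_pt_plus; [apply HF; lra|apply continuity_const]. }
  { intros t Ht; specialize (HFM t ltac:(lra)); pose proof (rpow_ge0 t (th - 1)); split; nra. }
  exists (l + -1 * (M / th)).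
  apply (lim0_ext (fun e => RInt (fun t => rpow t (th - 1) * (F t + M)) e 1
                            + -1 * (M * ((1 - rpow e th) / th)))) with 1; [lra| |].
  - intros e He.
    assert (Hex1 : ex_RInt (fun t => rpow t (th - 1) * F t) e 1).
    { apply ex_RInt_cont; [lra|]; intros x Hx.
      apply continuity_pt_mult; [apply continuity_rpow_pos|apply HF]; lra. }
    assert (Hex2 : ex_RInt (fun t => rpow t (th - 1)) e 1)
      by (apply ex_RInt_cont; [lra|]; intros x Hx; apply continuity_rpow_pos; lra).
    rewrite (RInt_extR _ (fun t => rpow t (th - 1) * F t + M * rpow t (th - 1))) by (intros; ring).
    rewrite RInt_plusR, RInt_scalR, RInt_rpow, rpow_1 by (auto || lra || now apply ex_RInt_scalR).
    as_R_eq; ring.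
  - apply lim0_plus; [auto|apply lim0_scal].
    replace (M / th) with (M * ((1 - rpow 0 th) / th)) by (rewrite rpow_0_l by lra; field; lra).
    apply (lim0_cont (fun e => M * ((1 - rpow e th) / th))).
    apply continuity_pt_mult; [apply continuity_const|].
    apply continuity_pt_mult; [|apply continuity_const].
    apply continuity_pt_minus; [apply continuity_const|apply continuity_rpow; lra].
Qed.

Lemma kernel_estimate th lam F dF H : 0 < th ->
  (forall t, 0 <= t <= 1 -> derivable_pt_lim F t (dF t)) ->
  (forall t, 0 <= t <= 1 -> Rabs (dF t) <= H t) ->
  (forall x, continuity_pt H x) ->
  exists L, lim0 (fun e => th * RInt (fun t => rpow t (th - 1) * F t) e 1) L /\
    Rabs ((1 - lam) * F 1 + lam * F 0 - L)
    <= RInt (fun t => Rabs (rpow t th - lam) * H t) 0 1.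
Proof.
  intros Hth HF Hd Hc.
  assert (cF : cont_on F 0 1)
    by (intros x Hx; apply derivable_continuous_pt; exists (dF x); now apply HF).
  destruct (improper_integral_at_0 th F Hth cF) as [L0 HL0].
  set (I := fun e => th * RInt (fun t => rpow t (th - 1) * F t) e 1).
  assert (HI : lim0 I (th * L0)) by now apply lim0_scal.
  exists (th * L0); split; [auto|].
  set (T := fun e => (rpow 1 th - lam) * F 1 + -1 * ((rpow e th - lam) * F e) + -1 * I e).
  assert (HT : lim0 T ((rpow 1 th - lam) * F 1 + -1 * ((rpow 0 th - lam) * F 0)
                       + -1 * (th * L0))).
  { apply lim0_plus; [apply lim0_plus; [apply lim0_const|apply lim0_scal]|now apply lim0_scal].
    apply (lim0_cont (fun e => (rpow e th - lam) * F e)), continuity_pt_mult; [|apply cF; lra].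
    apply continuity_pt_minus; [apply continuity_rpow; lra|apply continuity_const]. }
  rewrite rpow_1, rpow_0_l in HT by lra.
  replace ((1 - lam) * F 1 + lam * F 0 - th * L0)
    with ((1 - lam) * F 1 + -1 * ((0 - lam) * F 0) + -1 * (th * L0)) by ring.
  apply (lim0_abs_le T _ _ 1); [lra|auto|]; intros e He.
  set (w := fun t => Rabs (rpow t th - lam) * H t).
  assert (Cw : forall x, continuity_pt w x).
  { intros x; apply continuity_pt_mult; [|auto].
    apply continuity_kernel; lra. }
  rewrite <- (RInt_ChaslesR w 0 e 1) by now apply ex_RInt_cont_everywhere.
  assert (0 <= RInt w 0 e).
  { apply RInt_ge_0; [lra|now apply ex_RInt_cont_everywhere|]; intros x Hx.
    apply Rmult_le_pos; [apply Rabs_pos|]; specialize (Hd x ltac:(lra)).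
    pose proof (Rabs_pos (dF x)); lra. }
  assert (Rabs (T e) <= RInt w e 1); [|lra].
  unfold T, I; rewrite rpow_1.
  replace ((1 - lam) * F 1 + -1 * ((rpow e th - lam) * F e)
           + -1 * (th * RInt (fun t => rpow t (th - 1) * F t) e 1))
    with ((rpow 1 th - lam) * F 1 - (rpow e th - lam) * F e
          - th * RInt (fun t => rpow t (th - 1) * F t) e 1) by (rewrite rpow_1; ring).
  apply (kernel_parts_bound th lam F dF); auto; [lra| |]; intros t Ht; [apply HF|apply Hd]; lra.
Qed.

(** * The Gamma function: [Gamma (th + 1) = th * Gamma th > 0] *)

Definition gamma_density th t := rpow t (th - 1) * exp (- t).

Lemma deriv_exp_neg x : derivable_pt_lim (fun t => exp (- t)) x (- exp (- x)).
Proof.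
  replace (- exp (- x)) with (exp (- x) * - (1)) by ring.
  apply (derivable_pt_lim_comp (fun t => - t) exp);
    [apply (derivable_pt_lim_opp (fun t => t)), derivable_pt_lim_id|apply derivable_pt_lim_exp].
Qed.

Lemma continuity_exp_neg x : continuity_pt (fun t => exp (- t)) x.
Proof. apply derivable_continuous_pt; eexists; apply deriv_exp_neg. Qed.

Lemma continuity_gamma_density th x : 0 < x -> continuity_pt (gamma_density th) x.
Proof.
  intros; apply continuity_pt_mult; [now apply continuity_rpow_pos|apply continuity_exp_neg].
Qed.

Lemma gamma_density_pos th x : 0 < x -> 0 < gamma_density th x.
Proof. intros; apply Rmult_lt_0_compat; [now apply rpow_gt0|apply exp_pos]. Qed.

Lemma ex_RInt_gamma_density th c d : 0 < c -> c <= d -> ex_RInt (gamma_density th) c d.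
Proof. intros; apply ex_RInt_cont; auto; intros x Hx; apply continuity_gamma_density; lra. Qed.

(* [exp (-t) <= k^k t^(-k)], from [exp (t/k) >= t/k]. *)
Lemma exp_neg_decay t k : 0 < t -> 0 < k -> exp (- t) <= Rpower k k * Rpower t (- k).
Proof.
  intros Ht Hk.
  assert (E1 : Rpower (t / k) k <= Rpower (exp (t / k)) k).
  { apply Rle_Rpower_l; [lra|split; [apply Rdiv_lt_0_compat; auto|]].
    pose proof (exp_ineq1 (t / k)); assert (0 < t / k) by (apply Rdiv_lt_0_compat; auto).
    assert (1 + t / k < exp (t / k)) by (apply H; lra); lra. }
  unfold Rpower at 2 in E1; rewrite ln_exp in E1.
  replace (k * (t / k)) with t in E1 by (field; lra).
  unfold Rdiv in E1; rewrite <- Rpower_mult_distr in E1 by (auto; apply Rinv_0_lt_compat; auto).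
  rewrite exp_Ropp.
  assert (Hp : 0 < Rpower t k * Rpower (/ k) k) by (apply Rmult_lt_0_compat; apply Rpower_pos).
  apply Rle_trans with (/ (Rpower t k * Rpower (/ k) k)); [now apply Rinv_le_contravar|].
  rewrite Rinv_mult; unfold Rpower; rewrite <- !exp_Ropp, ln_Rinv by auto.
  replace (- (k * - ln k)) with (k * ln k) by ring; rewrite Rmult_comm.
  replace (- k * ln t) with (- (k * ln t)) by ring; right; reflexivity.
Qed.

Lemma gamma_density_tail th t : 0 < th -> 0 < t ->
  gamma_density th t <= Rpower (th + 1) (th + 1) * rpow t (-1 - 1).
Proof.
  intros Hth Ht; unfold gamma_density; rewrite !rpow_pos by auto.
  apply Rle_trans with (Rpower t (th - 1) * (Rpower (th + 1) (th + 1) * Rpower t (- (th + 1)))).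
  - apply Rmult_le_compat_l; [left; apply Rpower_pos|apply exp_neg_decay; lra].
  - right; replace (-1 - 1) with (- (th + 1) + (th - 1)) by ring; rewrite (Rpower_plus (- (th + 1)) (th - 1) t); ring.
Qed.

Lemma gamma_head_limit th : 0 < th ->
  exists j, lim0 (fun h => RInt (gamma_density th) h 1) j /\ 0 <= j.
Proof.
  intros Hth.
  destruct (improper_integral_at_0 th (fun t => exp (- t)) Hth) as [j Hj];
    [intros x _; apply continuity_exp_neg|].
  exists j; split; [exact Hj|].
  assert (-1 * j <= 0); [|lra].
  apply (lim0_le (fun h => -1 * RInt (gamma_density th) h 1) _ 1); [lra|now apply lim0_scal|].
  intros h Hh; assert (0 <= RInt (gamma_density th) h 1); [|lra].
  apply RInt_ge_0; [lra|apply ex_RInt_gamma_density; lra|].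
  intros; left; apply gamma_density_pos; lra.
Qed.

Lemma gamma_tail_limit th : 0 < th ->
  exists i, limi (fun N => RInt (gamma_density th) 1 N) i /\ 0 < i.
Proof.
  intros Hth; set (C := Rpower (th + 1) (th + 1)).
  assert (Hmono : forall y1 y2, 1 <= y1 <= y2 ->
            RInt (gamma_density th) 1 y1 <= RInt (gamma_density th) 1 y2).
  { intros y1 y2 Hy; rewrite <- (RInt_ChaslesR _ 1 y1 y2) by (apply ex_RInt_gamma_density; lra).
    assert (0 <= RInt (gamma_density th) y1 y2); [|lra].
    apply RInt_ge_0; [lra|apply ex_RInt_gamma_density; lra|intros; left; apply gamma_density_pos; lra]. }
  destruct (limi_monotone (fun N => RInt (gamma_density th) 1 N) C) as [i Hi];
    [intros; apply Hmono; lra| |].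
  - intros y Hy.
    assert (Hex : ex_RInt (fun t => -1 * rpow t (-1 - 1)) 1 y).
    { apply ex_RInt_cont; [lra|]; intros x Hx; apply continuity_pt_mult;
        [apply continuity_const|apply continuity_rpow_pos; lra]. }
    apply Rle_trans with (RInt (fun t => - C * (-1 * rpow t (-1 - 1))) 1 y).
    + apply RInt_le; [lra|apply ex_RInt_gamma_density; lra|now apply ex_RInt_scalR|].
      intros x Hx; replace (- C * (-1 * rpow x (-1 - 1))) with (C * rpow x (-1 - 1)) by ring.
      apply gamma_density_tail; lra.
    + rewrite RInt_scalR, RInt_power, rpow_1 by (auto; lra).
      pose proof (rpow_ge0 y (-1)); assert (0 < C) by apply Rpower_pos; nra.
  - exists i; split; [auto|].
    apply Rlt_le_trans with (RInt (gamma_density th) 1 2).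
    + apply RInt_gt_0; [lra|intros; apply gamma_density_pos; lra|].
      intros x Hx; apply continuity_pt_filterlim, continuity_gamma_density; lra.
    + apply (limi_ge (fun N => RInt (gamma_density th) 1 N) _ 2); [lra|auto|intros; apply Hmono; lra].
Qed.

Lemma improper_integral_value g j i : (forall x, 0 < x -> continuity_pt g x) ->
  lim0 (fun h => RInt g h 1) j -> limi (fun N => RInt g 1 N) i ->
  lim_pinf (fun N => lim0p (fun h => Rint g h N)) = j + i.
Proof.
  intros Hg Hj Hi.
  assert (Hex : forall c d, 0 < c <= d -> ex_RInt g c d)
    by (intros c d Hcd; apply ex_RInt_cont; [lra|]; intros x Hx; apply Hg; lra).
  apply lim_pinf_eq, (limi_ext (fun N => j + RInt g 1 N)) with 1; [lra| |].
  - intros N HN; symmetry; apply lim0p_eq.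
    apply (lim0_ext (fun h => RInt g h 1 + RInt g 1 N)) with 1; [lra| |].
    + intros h Hh; rewrite Rint_RInt by (apply Hex; lra).
      apply RInt_ChaslesR; apply Hex; lra.
    + apply lim0_plus; [auto|apply lim0_const].
  - apply limi_plus; [apply limi_const|auto].
Qed.

Lemma gamma_parts th c d : 0 < th -> 0 < c <= d ->
  RInt (fun t => rpow t th * exp (- t)) c d
  = rpow c th * exp (- c) - rpow d th * exp (- d) + th * RInt (gamma_density th) c d.
Proof.
  intros Hth Hcd.
  rewrite (RInt_extR _ (fun t => exp (- t) * rpow t th)) by (intros; ring).
  rewrite (integration_by_parts (fun t => - exp (- t)) (fun t => exp (- t))
             (fun t => rpow t th) (fun t => th * rpow t (th - 1))); [|lra|..].
  - rewrite (RInt_extR (fun t => - exp (- t) * (th * rpow t (th - 1)))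
               (fun t => -1 * (th * gamma_density th t))) by (intros; unfold gamma_density; ring).
    rewrite !RInt_scalR; [as_R_eq; ring| |apply ex_RInt_scalR];
      apply ex_RInt_gamma_density; lra.
  - intros x Hx; replace (exp (- x)) with (- - exp (- x)) by ring.
    apply (derivable_pt_lim_opp (fun t => exp (- t))), deriv_exp_neg.
  - intros x Hx; apply deriv_rpow; lra.
  - intros x Hx; apply continuity_exp_neg.
  - intros x Hx; apply continuity_pt_mult; [apply continuity_const|].
    apply continuity_rpow_pos; lra.
Qed.

Lemma Gamma_rec th : 0 < th -> Gamma (th + 1) = th * Gamma th /\ 0 < Gamma th.
Proof.
  intros Hth.
  destruct (gamma_head_limit th Hth) as [j [Hj Hj0]].
  destruct (gamma_tail_limit th Hth) as [i [Hi Hi0]].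
  assert (HG : Gamma th = j + i)
    by (apply improper_integral_value; auto; apply continuity_gamma_density).
  split; [|lra]; rewrite HG; unfold Gamma; replace (th + 1 - 1) with th by ring.
  set (u := fun t => rpow t th * exp (- t)).
  assert (Cu : forall x, continuity_pt u x)
    by (intros; apply continuity_pt_mult; [apply continuity_rpow; lra|apply continuity_exp_neg]).
  replace (th * (j + i)) with ((- u 1 + th * j) + (u 1 + th * i)) by ring.
  apply improper_integral_value; [intros x Hx; apply Cu| |].
  - apply (lim0_ext (fun h => u h + (- u 1 + th * RInt (gamma_density th) h 1))) with 1; [lra| |].
    + intros h Hh; unfold u; rewrite gamma_parts by lra; ring.
    + replace (- u 1 + th * j) with (u 0 + (- u 1 + th * j))
        by (unfold u; rewrite rpow_0_l by lra; ring).
      apply lim0_plus; [now apply lim0_cont|apply lim0_plus; [apply lim0_const|now apply lim0_scal]].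
  - apply (limi_ext (fun N => u 1 + (-1 * u N + th * RInt (gamma_density th) 1 N))) with 1; [lra| |].
    + intros N HN; unfold u; rewrite gamma_parts by lra; ring.
    + replace (u 1 + th * i) with (u 1 + (-1 * 0 + th * i)) by ring.
      apply limi_plus; [apply limi_const|apply limi_plus; apply limi_scal; [|auto]].
      apply (limi_squeeze u (Rpower (th + 1) (th + 1))); intros y Hy; unfold u; split.
      * apply Rmult_le_pos; [apply rpow_ge0|left; apply exp_pos].
      * pose proof (gamma_density_tail th y Hth ltac:(lra)) as Hb; unfold gamma_density in Hb.
        replace (rpow y th) with (y * rpow y (th - 1))
          by (replace th with (1 + (th - 1)) at 2 by ring; rewrite rpow_plus_pos, rpow_1_r; lra).
        replace (Rpower (th + 1) (th + 1) / y)
          with (y * (Rpower (th + 1) (th + 1) * rpow y (-1 - 1)))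
          by (replace (-1 - 1) with (- (1 + 1)) by ring;
              rewrite rpow_pos, Rpower_Ropp, (Rpower_plus 1 1 y), Rpower_1 by lra; field; lra).
        rewrite Rmult_assoc; apply Rmult_le_compat_l; lra.
Qed.

(** * A Hoelder (power-mean) inequality on [[0, 1]] *)

Lemma rpow_nonpos_exponent t s : 0 < t -> s <= 0 ->
  (t <= 1 -> 1 <= rpow t s) /\ (1 <= t -> rpow t s <= 1).
Proof.
  intros Ht Hs.
  assert (Hinv : rpow t s * rpow t (- s) = 1)
    by (rewrite <- rpow_plus_pos by auto; replace (s + - s) with 0 by ring; apply rpow_0).
  pose proof (rpow_gt0 t s Ht); pose proof (rpow_gt0 t (- s) Ht); split; intros Ht1.
  - assert (rpow t (- s) <= 1) by (apply rpow_le_1; lra); nra.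
  - assert (1 <= rpow t (- s)) by (rewrite <- (rpow_1 (- s)); apply rpow_le_l; lra); nra.
Qed.

Lemma rpow_bernoulli z p : 0 <= z -> 0 < p <= 1 -> rpow z p <= 1 + p * (z - 1).
Proof.
  intros Hz Hp; destruct (Rle_lt_or_eq_dec _ _ Hz) as [Hz'| <-]; [|rewrite rpow_0_l; lra].
  set (phi := fun t => 1 + p * (t - 1) - rpow t p).
  assert (Hd : forall c, 0 < c -> derivable_pt_lim phi c (p * (1 - rpow c (p - 1)))).
  { intros c Hc; replace (p * (1 - rpow c (p - 1))) with (0 + p * (1 - 0) - p * rpow c (p - 1)) by ring.
    apply derivable_pt_lim_minus; [apply derivable_pt_lim_plus|now apply deriv_rpow].
    - apply derivable_pt_lim_const.
    - apply derivable_pt_lim_scal, derivable_pt_lim_minus;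
        [apply derivable_pt_lim_id|apply derivable_pt_lim_const]. }
  assert (phi 1 <= phi z); [|unfold phi in *; rewrite rpow_1 in *; lra].
  destruct (Rle_dec z 1) as [Hz1|Hz1].
  - assert (- phi z <= - phi 1); [|lra].
    apply (nondecreasing_of_deriv (fun t => - phi t) (fun c => - (p * (1 - rpow c (p - 1))))); auto.
    + intros x Hx; apply (derivable_pt_lim_opp phi), Hd; lra.
    + intros x Hx; assert (1 <= rpow x (p - 1)) by (apply rpow_nonpos_exponent; lra); nra.
  - apply (nondecreasing_of_deriv phi (fun c => p * (1 - rpow c (p - 1)))); [lra| |].
    + intros x Hx; apply Hd; lra.
    + intros x Hx; assert (rpow x (p - 1) <= 1) by (apply rpow_nonpos_exponent; lra); nra.
Qed.

(* Tangent-line bound expressing the concavity of [y |-> y^p], [0 < p <= 1]. *)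
Lemma rpow_tangent y A p : 0 <= y -> 0 < A -> 0 < p <= 1 ->
  rpow y p <= rpow A p + p * rpow A (p - 1) * (y - A).
Proof.
  intros Hy HA Hp.
  assert (Hz : 0 <= y / A) by (apply Rmult_le_pos; [auto|left; now apply Rinv_0_lt_compat]).
  pose proof (rpow_bernoulli (y / A) p Hz Hp).
  assert (E1 : rpow y p = rpow A p * rpow (y / A) p)
    by (rewrite <- rpow_mult_distr by lra; f_equal; field; lra).
  assert (E2 : rpow A (p - 1) = rpow A p / A).
  { replace p with ((p - 1) + 1) at 2 by ring; rewrite rpow_plus_pos, rpow_1_r by lra; field; lra. }
  rewrite E1, E2; pose proof (rpow_gt0 A p HA).
  apply Rle_trans with (rpow A p * (1 + p * (y / A - 1))); [apply Rmult_le_compat_l; lra|].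
  right; field; lra.
Qed.

Section Hoelder.

Variables (q : R) (w v : R -> R).
Hypothesis Hq : 1 <= q.
Hypothesis Cw : forall x, continuity_pt w x.
Hypothesis Cv : forall x, continuity_pt v x.
Hypothesis Hw : forall x, 0 <= x <= 1 -> 0 <= w x.
Hypothesis Hv : forall x, 0 <= x <= 1 -> 0 <= v x.

Let p := 1 / q.
Let W := RInt w 0 1.
Let V := RInt (fun t => w t * v t) 0 1.
Let X := RInt (fun t => w t * rpow (v t) p) 0 1.

Lemma exponent_range : 0 < p <= 1.
Proof.
  unfold p; split; [apply Rdiv_lt_0_compat; lra|].
  unfold Rdiv; rewrite Rmult_1_l, <- Rinv_1; apply Rinv_le_contravar; lra.
Qed.

(* Integrating the tangent-line bound at the point [A] against [w]. *)
Lemma hoelder_tangent_bound A : 0 < A -> X <= rpow A p * W + p * rpow A (p - 1) * (V - A * W).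
Proof.
  intros HA; pose proof exponent_range.
  assert (Cvp : forall x, continuity_pt (fun t => rpow (v t) p) x).
  { intros x; apply continuity_pt_comp with (f2 := fun s => rpow s p); [auto|].
    apply continuity_rpow; lra. }
  assert (ex_wv : ex_RInt (fun t => w t * v t) 0 1)
    by (apply ex_RInt_cont_everywhere; intros; now apply continuity_pt_mult).
  assert (ex_w : ex_RInt w 0 1) by now apply ex_RInt_cont_everywhere.
  assert (ex_Aw : ex_RInt (fun t => A * w t) 0 1) by now apply ex_RInt_scalR.
  assert (ex_d : ex_RInt (fun t => w t * v t - A * w t) 0 1)
    by (apply (ex_RInt_minus (V := R_NormedModule)); auto).
  unfold X; apply Rle_trans with
    (RInt (fun t => rpow A p * w t + p * rpow A (p - 1) * (w t * v t - A * w t)) 0 1).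
  - apply RInt_le; [lra| |apply (ex_RInt_plus (V := R_NormedModule)); apply ex_RInt_scalR; auto|].
    + apply ex_RInt_cont_everywhere; intros; now apply continuity_pt_mult.
    + intros x Hx; pose proof (rpow_tangent (v x) A p ltac:(apply Hv; lra) HA ltac:(auto)).
      assert (0 <= w x) by (apply Hw; lra).
      replace (rpow A p * w x + p * rpow A (p - 1) * (w x * v x - A * w x))
        with (w x * (rpow A p + p * rpow A (p - 1) * (v x - A))) by ring.
      now apply Rmult_le_compat_l.
  - rewrite RInt_plusR, !RInt_scalR, RInt_minusR, RInt_scalR by (auto; apply ex_RInt_scalR; auto).
    right; unfold W, V; as_R_eq; ring.
Qed.

(* [int_0^1 w v^(1/q) <= (int_0^1 w)^(1 - 1/q) (int_0^1 w v)^(1/q)] when [int_0^1 w > 0]: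
   take the tangent point [A = V / W]; if [V = 0] then [X = 0] (any [A > 0] gives
   [X <= (1 - p) X / 2]). *)
Lemma hoelder : 0 < W -> X <= rpow W (1 - 1 / q) * rpow V (1 / q).
Proof.
  intros HW; pose proof exponent_range; fold p.
  assert (HV : 0 <= V).
  { apply RInt_ge_0; [lra| |intros; apply Rmult_le_pos; [apply Hw|apply Hv]; lra].
    apply ex_RInt_cont_everywhere; intros; now apply continuity_pt_mult. }
  destruct (Rle_lt_or_eq_dec _ _ HV) as [HV'| HV0].
  - pose proof (hoelder_tangent_bound (V / W) ltac:(now apply Rdiv_lt_0_compat)) as Hb.
    replace (V - V / W * W) with 0 in Hb by (field; lra).
    rewrite Rmult_0_r, Rplus_0_r in Hb; eapply Rle_trans; [apply Hb|right].
    unfold Rdiv; rewrite rpow_mult_distr by (lra || left; now apply Rinv_0_lt_compat).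
    rewrite !rpow_pos by (auto || now apply Rinv_0_lt_compat).
    replace (Rpower (/ W) p) with (Rpower W (- p))
      by (unfold Rpower; rewrite ln_Rinv by lra; f_equal; ring).
    replace (1 - p) with (1 + - p) by ring.
    rewrite (Rpower_plus 1 (- p) W), Rpower_1 by auto; ring.
  - rewrite <- HV0, rpow_0_l, Rmult_0_r by lra.
    apply Rnot_lt_le; intros HX.
    set (A := rpow (X / (2 * W)) (/ p)).
    assert (HA : 0 < A) by (apply rpow_gt0, Rdiv_lt_0_compat; lra).
    assert (EA : rpow A p = X / (2 * W)).
    { unfold A; rewrite rpow_mult by (try left; try apply Rdiv_lt_0_compat; try apply Rinv_neq_0_compat;
        try rewrite Rinv_l; lra).
      rewrite Rinv_l by lra; apply rpow_1_r; left; apply Rdiv_lt_0_compat; lra. }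
    assert (EA1 : rpow A (p - 1) * A = rpow A p)
      by (replace p with ((p - 1) + 1) at 2 by ring; rewrite rpow_plus_pos, rpow_1_r by lra; ring).
    pose proof (hoelder_tangent_bound A HA) as Hb; rewrite <- HV0 in Hb.
    replace (rpow A p * W + p * rpow A (p - 1) * (0 - A * W)) with ((1 - p) * rpow A p * W)
      in Hb by (rewrite <- EA1; ring).
    rewrite EA in Hb; replace ((1 - p) * (X / (2 * W)) * W) with ((1 - p) * X / 2) in Hb
      by (field; lra).
    nra.
Qed.

End Hoelder.

(** * The kernel integrals [A1], [A2], [A3] *)

Lemma kernel_threshold th lam : 0 < th -> 0 <= lam <= 1 ->
  let t0 := rpow lam (/ th) in
  0 <= t0 <= 1 /\ rpow t0 th = lam /\
  (forall t, 0 <= t <= t0 -> rpow t th <= lam) /\ (forall t, t0 <= t -> lam <= rpow t th).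
Proof.
  intros Hth Hl t0.
  assert (Hi : 0 < / th) by now apply Rinv_0_lt_compat.
  assert (Et0 : rpow t0 th = lam) by (apply rpow_rpow_inverse; [lra|apply Rinv_l; lra]).
  assert (Ht0 : 0 <= t0 <= 1) by (split; [apply rpow_ge0|apply rpow_le_1; lra]).
  repeat split; try lra; intros t Ht; rewrite <- Et0; apply rpow_le_l; lra.
Qed.

Definition moment_primitive th lam al t :=
  rpow t (th + al + 1) / (th + al + 1) - lam * rpow t (al + 1) / (al + 1).

Lemma deriv_moment_primitive th lam al x : 0 < th -> 0 <= al -> 0 < x ->
  derivable_pt_lim (moment_primitive th lam al) x ((rpow x th - lam) * rpow x al).
Proof.
  intros Hth Hal Hx; unfold moment_primitive.
  replace ((rpow x th - lam) * rpow x al) with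
    ((th + al + 1) * rpow x (th + al + 1 - 1) * / (th + al + 1)
     - lam * ((al + 1) * rpow x (al + 1 - 1)) * / (al + 1))
    by (replace (th + al + 1 - 1) with (th + al) by ring;
        replace (al + 1 - 1) with al by ring; rewrite rpow_plus_pos by auto; field; lra).
  apply derivable_pt_lim_minus; apply derivable_pt_lim_scal_right;
    [|apply derivable_pt_lim_scal]; now apply deriv_rpow.
Qed.

Lemma continuity_moment_primitive th lam al x : 0 < th -> 0 <= al ->
  continuity_pt (moment_primitive th lam al) x.
Proof.
  intros Hth Hal; unfold moment_primitive; apply continuity_pt_minus;
    apply continuity_pt_mult; try apply continuity_const;
    [|apply continuity_pt_mult; [apply continuity_const|]]; apply continuity_rpow; lra.
Qed.

Lemma moment_primitive_values th lam al : 0 < th -> 0 <= lam <= 1 -> 0 <= al ->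
  let Psi := moment_primitive th lam al in
  Psi 1 + Psi 0 - 2 * Psi (rpow lam (/ th)) = Aconst2 al th lam.
Proof.
  intros Hth Hl Hal Psi.
  destruct (kernel_threshold th lam Hth Hl) as (Ht0 & Et0 & _).
  set (t0 := rpow lam (/ th)) in *.
  assert (Es : lam * rpow t0 (al + 1) = rpow lam (1 + (1 + al) / th)).
  { rewrite (rpow_plus_nonneg lam 1), (rpow_1_r lam) by (try apply Rdiv_lt_0_compat; lra); f_equal.
    assert (Hi : / th <> 0) by (apply Rinv_neq_0_compat; lra).
    unfold t0; rewrite rpow_mult; [f_equal; field; lra|lra|auto|].
    apply Rmult_integral_contrapositive; split; [auto|lra]. }
  assert (Ept : Psi t0 = lam * rpow t0 (al + 1) / (th + al + 1) - lam * rpow t0 (al + 1) / (al + 1)).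
  { unfold Psi, moment_primitive; replace (th + al + 1) with (th + (al + 1)) at 1 by ring.
    rewrite rpow_plus_nonneg, Et0 by lra; reflexivity. }
  assert (EP0 : Psi 0 = 0) by (unfold Psi, moment_primitive; rewrite !rpow_0_l by lra; field; lra).
  assert (EP1 : Psi 1 = 1 / (th + al + 1) - lam / (al + 1))
    by (unfold Psi, moment_primitive; rewrite !rpow_1; field; lra).
  rewrite Ept, EP0, EP1, Es; unfold Aconst2; field; lra.
Qed.

(* [int_0^1 |t^th - lam| t^al dt = A2(al, th, lam)]: integrate the primitive
   on each side of the threshold. *)
Lemma kernel_moment th lam al : 0 < th -> 0 <= lam <= 1 -> 0 <= al ->
  RInt (fun t => Rabs (rpow t th - lam) * rpow t al) 0 1 = Aconst2 al th lam.
Proof.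
  intros Hth Hl Hal.
  destruct (kernel_threshold th lam Hth Hl) as (Ht0 & _ & Hbelow & Habove).
  set (t0 := rpow lam (/ th)) in *.
  set (dPsi := fun t => (rpow t th - lam) * rpow t al).
  assert (cdP : forall a b, cont_on dPsi a b).
  { intros a b x _; unfold dPsi; apply continuity_pt_mult; [|apply continuity_rpow; lra].
    apply continuity_pt_minus; [apply continuity_rpow; lra|apply continuity_const]. }
  assert (cabs : forall a b, cont_on (fun t => Rabs (rpow t th - lam) * rpow t al) a b).
  { intros a b x _; apply continuity_pt_mult; [apply continuity_kernel|apply continuity_rpow]; lra. }
  rewrite <- (RInt_ChaslesR _ 0 t0 1) by (apply ex_RInt_cont; [lra|apply cabs]).
  rewrite (RInt_extR _ (fun t => -1 * dPsi t) 0 t0).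
  2:{ intros x Hx; rewrite Rmin_left, Rmax_right in Hx by lra; unfold dPsi.
      rewrite Rabs_left1 by (pose proof (Hbelow x ltac:(lra)); lra); ring. }
  rewrite (RInt_extR _ dPsi t0 1).
  2:{ intros x Hx; rewrite Rmin_left, Rmax_right in Hx by lra; unfold dPsi.
      rewrite Rabs_right by (pose proof (Habove x ltac:(lra)); lra); ring. }
  rewrite RInt_scalR by (apply ex_RInt_cont; [lra|apply cdP]).
  set (Psi := moment_primitive th lam al).
  rewrite (FTC_left_open Psi dPsi 0 t0), (FTC_left_open Psi dPsi t0 1); try lra;
    try (intros x Hx; apply deriv_moment_primitive; lra);
    try (now apply continuity_moment_primitive); try apply cdP.
  rewrite <- (moment_primitive_values th lam al) by lra; fold Psi t0; as_R_eq; ring.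
Qed.

Lemma kernel_mass th lam : 0 < th -> 0 <= lam <= 1 ->
  RInt (fun t => Rabs (rpow t th - lam)) 0 1 = Aconst1 th lam.
Proof.
  intros Hth Hl; rewrite (RInt_extR _ (fun t => Rabs (rpow t th - lam) * rpow t 0))
    by (intros; rewrite rpow_0; ring).
  rewrite kernel_moment by lra; unfold Aconst1, Aconst2.
  replace (1 + (1 + 0) / th) with (1 + 1 / th) by (field; lra); as_R_eq; field; lra.
Qed.

Lemma kernel_mass_pos th lam : 0 < th -> 0 <= lam <= 1 ->
  0 < RInt (fun t => Rabs (rpow t th - lam)) 0 1.
Proof.
  intros Hth Hl.
  assert (cw : forall a b, cont_on (fun t => Rabs (rpow t th - lam)) a b).
  { intros a b x _; apply continuity_kernel; lra. }
  destruct (Rle_lt_or_eq_dec _ _ (proj1 Hl)) as [Hl0| <-].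
  - destruct (kernel_threshold th lam Hth Hl) as (Ht0 & Et0 & _).
    set (t0 := rpow lam (/ th)) in *.
    assert (0 < t0) by (apply rpow_gt0; lra).
    rewrite <- (RInt_ChaslesR _ 0 t0 1) by (apply ex_RInt_cont; [lra|apply cw]).
    assert (0 < RInt (fun t => Rabs (rpow t th - lam)) 0 t0).
    { apply RInt_gt_0; [lra| |intros x _; apply continuity_pt_filterlim, (cw x x); lra].
      intros x Hx; apply Rabs_pos_lt.
      assert (rpow x th < lam) by (rewrite <- Et0; apply rpow_lt_l; lra); lra. }
    assert (0 <= RInt (fun t => Rabs (rpow t th - lam)) t0 1); [|lra].
    apply RInt_ge_0; [lra|apply ex_RInt_cont; [lra|apply cw]|intros; apply Rabs_pos].
  - apply RInt_gt_0; [lra| |intros x _; apply continuity_pt_filterlim, (cw x x); lra].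
    intros x Hx; apply Rabs_pos_lt; rewrite Rminus_0_r.
    assert (0 < rpow x th) by (apply rpow_gt0; lra); lra.
Qed.

(** * Riemann-Liouville integrals as scaled averages over [[0, 1]] *)

Lemma RL_scaling th D J K L : 0 < th -> 0 < D -> lim0 J L ->
  (forall h, 0 < h < D -> K h = rpow D th / th * J (h / D)) ->
  Gamma (th + 1) * (/ Gamma th * lim0p K) = rpow D th * L.
Proof.
  intros Hth HD HJ HK; destruct (Gamma_rec th Hth) as [HG HG0].
  rewrite (lim0p_eq K (rpow D th / th * L)), HG; [field; lra|].
  apply (lim0_ext (fun h => rpow D th / th * J (h / D))) with D; auto.
  - intros h Hh; symmetry; auto.
  - now apply lim0_scal, lim0_comp_scal.
Qed.

Lemma RL_left_substitution th f c d e : 0 < th -> c < d -> 0 < e <= 1 -> cont_on f c d ->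
  RInt (fun s => rpow (s - c) (th - 1) * f s) (c + (d - c) * e) d
  = rpow (d - c) th / th * (th * RInt (fun t => rpow t (th - 1) * f (c + (d - c) * t)) e 1).
Proof.
  intros Hth Hcd He Hf; set (D := d - c).
  assert (Hseg : forall t, 0 <= t <= 1 -> c <= c + D * t <= d) by (unfold D; intros; nra).
  assert (Hex : ex_RInt (fun t => rpow t (th - 1) * f (c + D * t)) e 1).
  { apply ex_RInt_cont; [lra|]; intros x Hx; apply continuity_pt_mult;
      [apply continuity_rpow_pos; lra|].
    apply continuity_pt_comp with (f2 := f); [reg|apply Hf, Hseg; lra]. }
  replace (c + D * e) with (D * e + c) by ring; replace d with (D * 1 + c) at 1 by (unfold D; ring).
  rewrite <- (RInt_comp_linR (fun s => rpow (s - c) (th - 1) * f s)).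
  - rewrite (RInt_extR _ (fun t => rpow D th * (rpow t (th - 1) * f (c + D * t)))).
    + rewrite RInt_scalR by auto; as_R_eq; field; lra.
    + intros t Ht; rewrite Rmin_left, Rmax_right in Ht by lra.
      replace (D * t + c - c) with (D * t) by ring; replace (D * t + c) with (c + D * t) by ring.
      assert (ED : rpow D th = D * rpow D (th - 1)).
      { replace th with ((th - 1) + 1) at 1 by ring; rewrite rpow_plus_pos, rpow_1_r by (unfold D; lra); ring. }
      rewrite ED, !rpow_pos, <- Rpower_mult_distr by (unfold D in *; nra); ring.
  - apply ex_RInt_cont; [unfold D in *; nra|]; intros x Hx; apply continuity_pt_mult;
      [|apply Hf; unfold D in *; nra].
    apply continuity_pt_comp with (f2 := fun s => rpow s (th - 1)); [reg|].
    apply continuity_rpow_pos; unfold D in *; nra.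
Qed.

Lemma RL_right_substitution th f c d e : 0 < th -> c < d -> 0 < e <= 1 -> cont_on f c d ->
  RInt (fun s => rpow (d - s) (th - 1) * f s) c (d + (c - d) * e)
  = rpow (d - c) th / th * (th * RInt (fun t => rpow t (th - 1) * f (d + (c - d) * t)) e 1).
Proof.
  intros Hth Hcd He Hf; set (D := d - c).
  assert (Hseg : forall t, 0 <= t <= 1 -> c <= d + (c - d) * t <= d) by (intros; nra).
  assert (Hex : ex_RInt (fun t => rpow t (th - 1) * f (d + (c - d) * t)) e 1).
  { apply ex_RInt_cont; [lra|]; intros x Hx; apply continuity_pt_mult;
      [apply continuity_rpow_pos; lra|].
    apply continuity_pt_comp with (f2 := f); [reg|apply Hf, Hseg; lra]. }
  set (g := fun s => rpow (d - s) (th - 1) * f s).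
  assert (Hexg : ex_RInt g ((c - d) * e + d) ((c - d) * 1 + d)).
  { apply ex_RInt_swap, ex_RInt_cont; [nra|]; intros x Hx; apply continuity_pt_mult;
      [|apply Hf; nra].
    apply continuity_pt_comp with (f2 := fun s => rpow s (th - 1)); [reg|].
    apply continuity_rpow_pos; nra. }
  replace c with ((c - d) * 1 + d) at 1 by ring; replace (d + (c - d) * e) with ((c - d) * e + d) by ring.
  rewrite <- (RInt_swapR g), <- (RInt_comp_linR g) by auto.
  rewrite (RInt_extR _ (fun t => - rpow D th * (rpow t (th - 1) * f (d + (c - d) * t)))).
  - rewrite RInt_scalR by auto; as_R_eq; field; lra.
  - intros t Ht; rewrite Rmin_left, Rmax_right in Ht by lra; unfold g.
    replace (d - ((c - d) * t + d)) with (D * t) by (unfold D; ring).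
    replace ((c - d) * t + d) with (d + (c - d) * t) by ring; replace (c - d) with (- D) by (unfold D; ring).
    assert (ED : rpow D th = D * rpow D (th - 1)).
    { replace th with ((th - 1) + 1) at 1 by ring; rewrite rpow_plus_pos, rpow_1_r by (unfold D; lra); ring. }
    rewrite ED, !rpow_pos, <- Rpower_mult_distr by (unfold D in *; nra); ring.
Qed.

Lemma RL_left_value th f c d L : 0 < th -> c <= d -> cont_on f c d ->
  lim0 (fun e => th * RInt (fun t => rpow t (th - 1) * f (c + (d - c) * t)) e 1) L ->
  Gamma (th + 1) * RL_left th f c d = rpow (d - c) th * L.
Proof.
  intros Hth Hcd Hf HL; unfold RL_left.
  destruct (Req_EM_T c d) as [<-|Hne]; [rewrite Rminus_diag, rpow_0_l by lra; ring|].
  apply (RL_scaling th (d - c) _ _ L Hth ltac:(lra) HL); intros h Hh.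
  assert (Hhd : 0 < h / (d - c) <= 1).
  { split; [apply Rdiv_lt_0_compat; lra|].
    apply (Rmult_le_reg_r (d - c)); [lra|]; unfold Rdiv; rewrite Rmult_assoc, Rinv_l; lra. }
  rewrite Rint_RInt.
  - replace (c + h) with (c + (d - c) * (h / (d - c))) by (field; lra).
    apply RL_left_substitution; auto; lra.
  - apply ex_RInt_cont; [lra|]; intros x Hx; apply continuity_pt_mult; [|apply Hf; lra].
    apply continuity_pt_comp with (f2 := fun s => rpow s (th - 1)); [reg|].
    apply continuity_rpow_pos; lra.
Qed.

Lemma RL_right_value th f c d L : 0 < th -> c <= d -> cont_on f c d ->
  lim0 (fun e => th * RInt (fun t => rpow t (th - 1) * f (d + (c - d) * t)) e 1) L ->
  Gamma (th + 1) * RL_right th f c d = rpow (d - c) th * L.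
Proof.
  intros Hth Hcd Hf HL; unfold RL_right.
  destruct (Req_EM_T c d) as [<-|Hne]; [rewrite Rminus_diag, rpow_0_l by lra; ring|].
  apply (RL_scaling th (d - c) _ _ L Hth ltac:(lra) HL); intros h Hh.
  assert (Hhd : 0 < h / (d - c) <= 1).
  { split; [apply Rdiv_lt_0_compat; lra|].
    apply (Rmult_le_reg_r (d - c)); [lra|]; unfold Rdiv; rewrite Rmult_assoc, Rinv_l; lra. }
  rewrite Rint_RInt.
  - replace (d - h) with (d + (c - d) * (h / (d - c))) by (field; lra).
    apply RL_right_substitution; auto; lra.
  - apply ex_RInt_cont; [lra|]; intros x Hx; apply continuity_pt_mult; [|apply Hf; lra].
    apply continuity_pt_comp with (f2 := fun s => rpow s (th - 1)); [reg|].
    apply continuity_rpow_pos; lra.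
Qed.

Lemma kernel_power_mean q th lam al m G1 G2 : 1 <= q -> 0 < th -> 0 <= lam <= 1 ->
  0 <= al -> 0 <= m -> 0 <= G1 -> 0 <= G2 ->
  RInt (fun t => Rabs (rpow t th - lam)
                 * rpow (rpow t al * G1 + m * (1 - rpow t al) * G2) (1 / q)) 0 1
  <= rpow (Aconst1 th lam) (1 - 1 / q)
     * rpow (G1 * Aconst2 al th lam + m * G2 * Aconst3 al th lam) (1 / q).
Proof.
  intros Hq Hth Hl Hal Hm HG1 HG2.
  set (k := fun t => Rabs (rpow t th - lam)).
  set (k2 := fun t => Rabs (rpow t th - lam) * rpow t al).
  set (v := fun t => rpow t al * G1 + m * (1 - rpow t al) * G2).
  assert (Ck : forall x, continuity_pt k x).
  { intros x; apply continuity_kernel; lra. }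
  assert (Cal : forall x, continuity_pt (fun t => rpow t al) x) by (intros; now apply continuity_rpow).
  assert (Cv : forall x, continuity_pt v x).
  { intros x; unfold v; apply continuity_pt_plus; apply continuity_pt_mult; auto;
      try (apply continuity_const).
    apply continuity_pt_mult; [apply continuity_const|].
    apply continuity_pt_minus; auto; apply continuity_const. }
  assert (Hv : forall t, 0 <= t <= 1 -> 0 <= v t).
  { intros t Ht; unfold v; pose proof (rpow_le_1 t al Hal Ht); pose proof (rpow_ge0 t al).
    apply Rplus_le_le_0_compat; [nra|apply Rmult_le_pos; [|auto]; nra]. }
  assert (Hk : ex_RInt k 0 1) by now apply ex_RInt_cont_everywhere.
  assert (Hk2 : ex_RInt k2 0 1) by (apply ex_RInt_cont_everywhere; intros; now apply continuity_pt_mult).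
  assert (HV : RInt (fun t => k t * v t) 0 1 = G1 * Aconst2 al th lam + m * G2 * Aconst3 al th lam).
  { rewrite (RInt_extR _ (fun t => G1 * k2 t + m * G2 * (k t - k2 t)))
      by (intros; unfold k, k2, v; ring).
    assert (Hd : ex_RInt (fun t => k t - k2 t) 0 1)
      by (apply (ex_RInt_minus (V := R_NormedModule)); auto).
    rewrite RInt_plusR, RInt_scalR, RInt_scalR, RInt_minusR by (auto || now apply ex_RInt_scalR).
    unfold k, k2; rewrite kernel_moment, kernel_mass by lra; unfold Aconst3; as_R_eq; ring. }
  eapply Rle_trans; [apply (hoelder q k v); auto; [intros; apply Rabs_pos|now apply kernel_mass_pos]|].
  rewrite HV; unfold k; rewrite kernel_mass by lra; lra.
Qed.

Lemma deriv_segment P Q t : derivable_pt_lim (fun t => P + (Q - P) * t) t (Q - P).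
Proof.
  assert (H : derivable_pt_lim (fun t => P + (Q - P) * t) t (0 + (Q - P) * 1)).
  { apply (derivable_pt_lim_plus (fun _ => P) (fun t => (Q - P) * t));
      [apply derivable_pt_lim_const|apply derivable_pt_lim_scal, derivable_pt_lim_id]. }
  now replace (0 + (Q - P) * 1) with (Q - P) in H by ring.
Qed.

Lemma segment_estimate q f f' m al th lam P Q G2 :
  1 <= q -> 0 <= m -> 0 <= al -> 0 < th -> 0 <= lam <= 1 -> 0 <= G2 ->
  (forall t, 0 <= t <= 1 -> derivable_pt_lim f (P + (Q - P) * t) (f' (P + (Q - P) * t))) ->
  (forall t, 0 <= t <= 1 -> rpow (Rabs (f' (P + (Q - P) * t))) q
     <= rpow t al * rpow (Rabs (f' Q)) q + m * (1 - rpow t al) * G2) ->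
  exists L, lim0 (fun e => th * RInt (fun t => rpow t (th - 1) * f (P + (Q - P) * t)) e 1) L /\
    Rabs ((1 - lam) * f Q + lam * f P - L)
    <= Rabs (Q - P) * (rpow (Aconst1 th lam) (1 - 1 / q)
       * rpow (rpow (Rabs (f' Q)) q * Aconst2 al th lam + m * G2 * Aconst3 al th lam) (1 / q)).
Proof.
  intros Hq Hm Hal Hth Hl HG2 Hd Hc.
  set (G1 := rpow (Rabs (f' Q)) q); assert (HG1 : 0 <= G1) by apply rpow_ge0.
  set (hh := fun t => rpow (rpow t al * G1 + m * (1 - rpow t al) * G2) (1 / q)).
  assert (Chh : forall x, continuity_pt hh x).
  { intros x; apply continuity_pt_comp with (f2 := fun s => rpow s (1 / q));
      [|apply continuity_rpow; unfold Rdiv; rewrite Rmult_1_l; left; apply Rinv_0_lt_compat; lra].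
    assert (Cal : continuity_pt (fun t => rpow t al) x) by now apply continuity_rpow.
    apply continuity_pt_plus; apply continuity_pt_mult; auto;
      try (apply continuity_const).
    apply continuity_pt_mult; [apply continuity_const|].
    apply continuity_pt_minus; auto; apply continuity_const. }
  destruct (kernel_estimate th lam (fun t => f (P + (Q - P) * t))
              (fun t => f' (P + (Q - P) * t) * (Q - P)) (fun t => Rabs (Q - P) * hh t))
    as [L [HL Hb]]; auto.
  - intros t Ht; apply (derivable_pt_lim_comp (fun t => P + (Q - P) * t) f); [|now apply Hd].
    apply deriv_segment.
  - intros t Ht; rewrite Rabs_mult, Rmult_comm; apply Rmult_le_compat_l; [apply Rabs_pos|].
    unfold hh; rewrite <- (rpow_rpow_inverse (Rabs (f' (P + (Q - P) * t))) q (1 / q))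
      by (apply Rabs_pos || field; lra).
    apply rpow_le_l; [unfold Rdiv; rewrite Rmult_1_l; left; apply Rinv_0_lt_compat; lra|].
    split; [apply rpow_ge0|now apply Hc].
  - intros x; apply continuity_pt_mult; [apply continuity_const|auto].
  - exists L; split; [auto|].
    replace (P + (Q - P) * 1) with Q in Hb by ring; replace (P + (Q - P) * 0) with P in Hb by ring.
    eapply Rle_trans; [apply Hb|].
    rewrite (RInt_extR _ (fun t => Rabs (Q - P) * (Rabs (rpow t th - lam) * hh t))) by (intros; ring).
    rewrite RInt_scalR; [apply Rmult_le_compat_l; [apply Rabs_pos|now apply kernel_power_mean]|].
    apply ex_RInt_cont_everywhere; intros x; apply continuity_pt_mult; [|auto].
    apply continuity_kernel; lra.
Qed.

Lemma interior_in (I : R -> Prop) z : interior I z -> I z.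
Proof. intros [d Hd]; apply Hd; unfold disc; rewrite Rminus_diag, Rabs_R0; apply cond_pos. Qed.

Lemma interior_between I u v z : is_interval I -> interior I u -> interior I v ->
  u <= z <= v -> interior I z.
Proof.
  intros HI Hu Hv Hz.
  destruct (Req_dec z u) as [->|Hzu]; [auto|]; destruct (Req_dec z v) as [->|Hzv]; [auto|].
  assert (Hd : 0 < Rmin (z - u) (v - z)) by (apply Rmin_pos; lra).
  exists (mkposreal _ Hd); intros y Hy; unfold disc in Hy; simpl in Hy.
  pose proof (Rmin_l (z - u) (v - z)); pose proof (Rmin_r (z - u) (v - z)).
  apply Rabs_def2 in Hy; apply (HI u y v); [now apply interior_in|now apply interior_in|lra].
Qed.

Lemma S_RL_split f m x lam th a b LL LR : 0 < m -> 0 < th -> a < b -> a <= x <= b ->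
  Gamma (th + 1) * RL_left th f (m * a) (m * x) = rpow (m * x - m * a) th * LL ->
  Gamma (th + 1) * RL_right th f (m * x) (m * b) = rpow (m * b - m * x) th * LR ->
  S_RL f m x lam th a b = rpow m (th - 1) / (b - a) *
    (rpow (x - a) th * ((1 - lam) * f (m * x) + lam * f (m * a) - LL)
     + rpow (b - x) th * ((1 - lam) * f (m * x) + lam * f (m * b) - LR)).
Proof.
  intros Hm Hth Hab Hx HL HR.
  assert (Hmt : forall y, 0 <= y -> rpow (m * y) th = m * rpow m (th - 1) * rpow y th).
  { intros y Hy; rewrite rpow_mult_distr by lra; f_equal.
    replace th with ((th - 1) + 1) at 1 by ring; rewrite rpow_plus_pos, rpow_1_r by lra; ring. }
  replace (m * x - m * a) with (m * (x - a)) in HL by ring.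
  replace (m * b - m * x) with (m * (b - x)) in HR by ring.
  rewrite Hmt in HL, HR by lra; unfold S_RL.
  replace (Gamma (th + 1) / (m * (b - a))
           * (RL_left th f (m * a) (m * x) + RL_right th f (m * x) (m * b)))
    with ((Gamma (th + 1) * RL_left th f (m * a) (m * x)
           + Gamma (th + 1) * RL_right th f (m * x) (m * b)) / (m * (b - a))) by (field; lra).
  rewrite HL, HR; field; lra.
Qed.

Lemma combine_sides m th a b x C Ba Bb TL TR : 0 < m -> 0 < th -> a < b -> a <= x <= b ->
  0 <= C -> Rabs TL <= m * (x - a) * (C * Ba) -> Rabs TR <= m * (b - x) * (C * Bb) ->
  Rabs (rpow m (th - 1) / (b - a) * (rpow (x - a) th * TL + rpow (b - x) th * TR))
  <= rpow m th * C / (b - a) * (rpow (x - a) (th + 1) * Ba + rpow (b - x) (th + 1) * Bb).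
Proof.
  intros Hm Hth Hab Hx HC HTL HTR.
  assert (Hmt : rpow m th = m * rpow m (th - 1)).
  { replace th with ((th - 1) + 1) at 1 by ring; rewrite rpow_plus_pos, rpow_1_r by lra; ring. }
  rewrite Hmt, !rpow_succ by lra.
  assert (HM : 0 <= rpow m (th - 1) / (b - a))
    by (apply Rmult_le_pos; [apply rpow_ge0|left; apply Rinv_0_lt_compat; lra]).
  pose proof (rpow_ge0 (x - a) th); pose proof (rpow_ge0 (b - x) th).
  rewrite Rabs_mult, (Rabs_right (rpow m (th - 1) / (b - a))) by lra.
  apply Rle_trans with (rpow m (th - 1) / (b - a)
    * (rpow (x - a) th * (m * (x - a) * (C * Ba)) + rpow (b - x) th * (m * (b - x) * (C * Bb)))).
  - apply Rmult_le_compat_l; [auto|]; eapply Rle_trans; [apply Rabs_triang|].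
    rewrite !Rabs_mult, (Rabs_right (rpow (x - a) th)), (Rabs_right (rpow (b - x) th)) by lra.
    apply Rplus_le_compat; apply Rmult_le_compat_l; auto.
  - right; field; lra.
Qed.

Section Theorem_2_3.

Variables (q : R) (I : R -> Prop) (f f' : R -> R) (m alpha a b : R).
Hypothesis Hq : 1 <= q.
Hypothesis HI : is_interval I.
Hypothesis HI0 : forall z, I z -> 0 <= z.
Hypothesis Hm : 0 < m <= 1.
Hypothesis Halpha : 0 <= alpha <= 1.
Hypothesis Hab : a < b.
Hypothesis Hma : interior I (m * a).
Hypothesis Hb : interior I b.
Hypothesis Hdf : forall y, interior I y -> derivable_pt_lim f y (f' y).
Hypothesis Hconv : alpha_m_convex alpha m (fun z => m * a <= z <= b)
  (fun z => rpow (Rabs (f' z)) q).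

Lemma ma_nonneg : 0 <= m * a.
Proof. now apply HI0, interior_in. Qed.

Lemma scaled_points_in_domain x : a <= x <= b ->
  m * a <= m * x <= m * b /\ m * a <= a /\ m * b <= b.
Proof. intros Hx; pose proof ma_nonneg; assert (0 <= a) by nra; repeat split; nra. Qed.

Lemma derivable_on_domain z : m * a <= z <= b -> derivable_pt_lim f z (f' z).
Proof. intros Hz; apply Hdf, (interior_between I (m * a) b); auto. Qed.

Lemma side_estimate x Y th lam : a <= x <= b -> Y = a \/ Y = b -> 0 < th -> 0 <= lam <= 1 ->
  exists L, lim0 (fun e => th * RInt (fun t => rpow t (th - 1)
                                        * f (m * Y + (m * x - m * Y) * t)) e 1) L /\
    Rabs ((1 - lam) * f (m * x) + lam * f (m * Y) - L)
    <= Rabs (m * x - m * Y) * (rpow (Aconst1 th lam) (1 - 1 / q)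
       * rpow (rpow (Rabs (f' (m * x))) q * Aconst2 alpha th lam
               + m * rpow (Rabs (f' Y)) q * Aconst3 alpha th lam) (1 / q)).
Proof.
  intros Hx HY Hth Hl; pose proof (scaled_points_in_domain x Hx).
  assert (Hmx : m * a <= m * x <= b) by lra.
  assert (HYd : m * a <= Y <= b /\ m * a <= m * Y <= b) by (destruct HY; subst; lra).
  assert (Hseg : forall t, 0 <= t <= 1 -> m * a <= m * Y + (m * x - m * Y) * t <= b) by (intros; nra).
  apply segment_estimate; try lra; [apply rpow_ge0| |].
  - intros t Ht; now apply derivable_on_domain, Hseg.
  - intros t Ht; replace (m * Y + (m * x - m * Y) * t) with (t * (m * x) + m * (1 - t) * Y) by ring.
    apply Hconv; [lra|lra|lra|].
    replace (t * (m * x) + m * (1 - t) * Y) with (m * Y + (m * x - m * Y) * t) by ring.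
    now apply Hseg.
Qed.

Lemma RL_left_side x th L : a <= x <= b -> 0 < th ->
  lim0 (fun e => th * RInt (fun t => rpow t (th - 1) * f (m * a + (m * x - m * a) * t)) e 1) L ->
  Gamma (th + 1) * RL_left th f (m * a) (m * x) = rpow (m * x - m * a) th * L.
Proof.
  intros Hx Hth HL; pose proof (scaled_points_in_domain x Hx); apply RL_left_value; auto; [lra|].
  intros z Hz; apply derivable_continuous_pt; eexists; apply derivable_on_domain; lra.
Qed.

Lemma RL_right_side x th L : a <= x <= b -> 0 < th ->
  lim0 (fun e => th * RInt (fun t => rpow t (th - 1) * f (m * b + (m * x - m * b) * t)) e 1) L ->
  Gamma (th + 1) * RL_right th f (m * x) (m * b) = rpow (m * b - m * x) th * L.
Proof.
  intros Hx Hth HL; pose proof (scaled_points_in_domain x Hx); apply RL_right_value; auto; [lra|].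
  intros z Hz; apply derivable_continuous_pt; eexists; apply derivable_on_domain; lra.
Qed.

End Theorem_2_3.

Theorem theorem2p3 (q : R) (Hq : 1 <= q)
  (I : R -> Prop) (f f' : R -> R) (m alpha a b : R)
  (HI : is_interval I) (HI0 : forall z, I z -> 0 <= z)
  (Hm : 0 < m <= 1) (Halpha : 0 <= alpha <= 1) (Hab : a < b)
  (Hma : interior I (m * a)) (Hb : interior I b)
  (Hdf : forall y, interior I y -> derivable_pt_lim f y (f' y))
  (Hconv : alpha_m_convex alpha m (fun z => m * a <= z <= b)
             (fun z => rpow (Rabs (f' z)) q)) :
  forall x lam th, a <= x <= b -> 0 <= lam <= 1 -> 0 < th ->
  Rabs (S_RL f m x lam th a b) <=
    rpow m th * rpow (Aconst1 th lam) (1 - 1 / q) / (b - a) *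
    ( rpow (x - a) (th + 1) *
        rpow (rpow (Rabs (f' (m * x))) q * Aconst2 alpha th lam
              + m * rpow (Rabs (f' a)) q * Aconst3 alpha th lam) (1 / q)
    + rpow (b - x) (th + 1) *
        rpow (rpow (Rabs (f' (m * x))) q * Aconst2 alpha th lam
              + m * rpow (Rabs (f' b)) q * Aconst3 alpha th lam) (1 / q) ).
Proof.
  intros x lam th Hx Hl Hth.
  destruct (scaled_points_in_domain I m a b HI0 Hm Hma x Hx) as (Hmx & _).
  destruct (side_estimate q I f f' m alpha a b Hq HI HI0 Hm Halpha Hab Hma Hb Hdf Hconv x a th lam)
    as [LL [HLL HBL]]; auto.
  destruct (side_estimate q I f f' m alpha a b Hq HI HI0 Hm Halpha Hab Hma Hb Hdf Hconv x b th lam)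
    as [LR [HLR HBR]]; auto.
  rewrite (S_RL_split f m x lam th a b LL LR); try lra;
    [|now apply (RL_left_side I f f' m a b)|now apply (RL_right_side I f f' m a b)].
  rewrite (Rabs_right (m * x - m * a)) in HBL by lra.
  rewrite (Rabs_left1 (m * x - m * b)) in HBR by lra.
  apply combine_sides; [lra..|apply rpow_ge0| |].
  - eapply Rle_trans; [exact HBL|right; ring].
  - eapply Rle_trans; [exact HBR|right; ring].
Qed.
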